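(* Let $t\le T$, $\omega_1(0)\in L_2(\Omega)$, $u_1\in L_4(\Omega^t)$, $F_1\in L_2(0,t;L_{6/5}(\Omega))$, and let $\omega_1$ solve \[\omega_{1,t}+\bm v\cdot\nabla\omega_1-\nu\Big(\Delta\omega_1+\frac2r\omega_{1,r}\Big)=2u_1u_{1,z}+F_1\ \text{in }\Omega^t,\qquad\omega_1=0\ \text{on }S^t,\qquad\omega_1|_{t=0}=\omega_1(0).\] Then \[\frac12\int_\Omega\omega_1^2\,dx+\frac\nu2\int_{\Omega^t}|\nabla\omega_1|^2dx\,dt'+\nu\int_0^t\int_{-a}^a\omega_1^2\big|_{r=0}dz\,dt'\le\frac1\nu\int_{\Omega^t}u_1^4dx\,dt'+c\|F_1\|_{L_2(0,t;L_{6/5}(\Omega))}^2+\int_\Omega\omega_1^2(0)\,dx,\] where the first term on the left is evaluated at time $t$.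
   Context: $\Omega=\{x\in\mathbb R^3: r<R,|z|<a\}$ in cylindrical coordinates, $S=\partial\Omega$, $\Omega^t=\Omega\times(0,t)$, $S^t=S\times(0,t)$, $\nu>0$. $\bm v=v_r\bar e_r+v_\varphi\bar e_\varphi+v_z\bar e_z$ is an axially symmetric solution of the Navier–Stokes equations $\bm v_t+(\bm v\cdot\nabla)\bm v-\nu\Delta\bm v+\nabla p=\bm f$, $\operatorname{div}\bm v=0$ in $\Omega$ with $\bm v\cdot\bar n=0$, $v_\varphi=0$, $\omega_\varphi=v_{r,z}-v_{z,r}=0$ on $S$. $u_1=v_\varphi/r$, $\omega_1=\omega_\varphi/r$, $F_1=F_\varphi/r$ with $F_\varphi=(\operatorname{rot}\bm f)\cdot\bar e_\varphi$. $\nabla=\bar e_r\partial_r+\bar e_z\partial_z$, $\Delta=\partial_r^2+\frac1r\partial_r+\partial_z^2$. $c$ is a generic positive constant. Solutions are assumed regular enough for the computations. *)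

From Stdlib Require Import Reals.
From Coquelicot Require Import Coquelicot.
Open Scope R_scope.

(* Axially symmetric scalar fields are represented as functions of
   (r, z, s) (cylindrical radius, height, time).  *)
Definition field3 := R -> R -> R -> R.

Definition d_r (f : field3) : field3 := fun r z s => Derive (fun r' => f r' z s) r.
Definition d_z (f : field3) : field3 := fun r z s => Derive (fun z' => f r z' s) z.
Definition d_s (f : field3) : field3 := fun r z s => Derive (fun s' => f r z s') s.

Definition cont3 (f : field3) : Prop :=
  forall r z s eps, 0 < eps -> exists delta, 0 < delta /\
    forall r' z' s', Rabs (r' - r) < delta -> Rabs (z' - z) < delta ->
      Rabs (s' - s) < delta -> Rabs (f r' z' s' - f r z s) < eps.

Definition C1_3 (f : field3) : Prop :=
  cont3 f /\
  (forall r z s, ex_derive (fun r' => f r' z s) r) /\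
  (forall r z s, ex_derive (fun z' => f r z' s) z) /\
  (forall r z s, ex_derive (fun s' => f r z s') s) /\
  cont3 (d_r f) /\ cont3 (d_z f) /\ cont3 (d_s f).

Definition reg2 (f : field3) : Prop :=
  C1_3 f /\
  (forall r z s, ex_derive (fun r' => d_r f r' z s) r) /\
  (forall r z s, ex_derive (fun z' => d_z f r z' s) z) /\
  cont3 (d_r (d_r f)) /\ cont3 (d_z (d_z f)).

(* Power x^y for x >= 0 (with 0^y = 0 for y > 0); Stdlib's Rpower is only
   meaningful for x > 0. *)
Definition rpow (x y : R) : R := if Rle_dec x 0 then 0 else Rpower x y.

(* Integral over Omega = {r < Rr, |z| < a} of an axially symmetric function
   g(r,z):  int_Omega g dx = 2 pi int_{-a}^{a} int_0^{Rr} g(r,z) r dr dz. *)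
Definition int_Omega (Rr a : R) (g : R -> R -> R) : R :=
  2 * PI * RInt (fun z => RInt (fun r => g r z * r) 0 Rr) (- a) a.

Definition int_Omega_t (Rr a t : R) (f : field3) : R :=
  RInt (fun s => int_Omega Rr a (fun r z => f r z s)) 0 t.

Definition Lp_Omega (Rr a p : R) (g : R -> R -> R) : R :=
  rpow (int_Omega Rr a (fun r z => rpow (Rabs (g r z)) p)) (1 / p).

Definition L2Lp_Omega_t (Rr a p t : R) (f : field3) : R :=
  sqrt (RInt (fun s => (Lp_Omega Rr a p (fun r z => f r z s)) ^ 2) 0 t).

From Stdlib Require Import Reals Lra Psatz ClassicalEpsilon.
From Coquelicot Require Import Coquelicot.
Open Scope R_scope.

(* Multiply the equation by [w1] and integrate over [Omega] in the cylindrical variables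
   [(r, z)] with weight [r].  Since [div v = 0] and [w1 = 0] on [S], the transport term
   integrates to zero, the viscous terms give [- nu |grad w1|^2], and the additional term
   [2/r w1_r] gives the trace [- nu w1(0, z)^2] on the axis.  Integrating [2 u1 u1_z w1] by
   parts in [z] gives [- u1^2 w1_z], which Young's inequality absorbs.  For [F1 w1], Young's
   inequality with exponents 6/5 and 6 is combined with the Sobolev-type bound
   [int w^6 r <= 4096 (int |grad w|^2 r)^3] for [w] vanishing on [S] (which follows from
   [w^4(r, z) <= int |d_z w^4| dz], Cauchy--Schwarz and a radial inequality in [r]);
   optimizing the free Young parameter gives [nu/4 |grad w1|^2 + C/nu |F1|_(6/5)^2].
   Integrating the resulting differential inequality in time gives the estimate. *)

Definition cont_1d (f : R -> R) : Prop := forall x, continuous f x.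
Definition cont_2d (g : R -> R -> R) : Prop := forall x y, continuity_2d_pt g x y.

Lemma ex_RInt_cont_1d f a b : cont_1d f -> ex_RInt f a b.
Proof. now intros Hf; apply (ex_RInt_continuous (V := R_CompleteNormedModule)). Qed.

Lemma ex_RInt_Rplus f g a b :
  ex_RInt f a b -> ex_RInt g a b -> ex_RInt (fun x => f x + g x) a b.
Proof. apply (ex_RInt_plus (V := R_NormedModule)). Qed.

Lemma ex_RInt_Rminus f g a b :
  ex_RInt f a b -> ex_RInt g a b -> ex_RInt (fun x => f x - g x) a b.
Proof. apply (ex_RInt_minus (V := R_NormedModule)). Qed.

Lemma ex_RInt_Rmult_l f c a b : ex_RInt f a b -> ex_RInt (fun x => c * f x) a b.
Proof. apply (ex_RInt_scal (V := R_NormedModule)). Qed.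

Lemma RInt_Rplus f g a b : ex_RInt f a b -> ex_RInt g a b ->
  RInt (fun x => f x + g x) a b = RInt f a b + RInt g a b.
Proof. apply (RInt_plus (V := R_CompleteNormedModule)). Qed.

Lemma RInt_Rminus f g a b : ex_RInt f a b -> ex_RInt g a b ->
  RInt (fun x => f x - g x) a b = RInt f a b - RInt g a b.
Proof. apply (RInt_minus (V := R_CompleteNormedModule)). Qed.

Lemma RInt_Rmult_l f c a b : ex_RInt f a b -> RInt (fun x => c * f x) a b = c * RInt f a b.
Proof. apply (RInt_scal (V := R_CompleteNormedModule)). Qed.

Lemma RInt_Rconst c a b : RInt (fun _ => c) a b = (b - a) * c.
Proof. apply (RInt_const (V := R_CompleteNormedModule)). Qed.

Lemma RInt_Rpoint f a : RInt f a a = 0.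
Proof. apply (RInt_point (V := R_CompleteNormedModule)). Qed.

Lemma RInt_Rswap f a b : ex_RInt f a b -> RInt f b a = - RInt f a b.
Proof. intros Hf; now rewrite <- (opp_RInt_swap (V := R_CompleteNormedModule) f a b Hf). Qed.

Lemma is_derive_Rmult f g x df dg : is_derive f x df -> is_derive g x dg ->
  is_derive (fun x => f x * g x) x (df * g x + f x * dg).
Proof. intros Hf Hg; apply (is_derive_mult (K := R_AbsRing)); auto; intros; apply Rmult_comm. Qed.

Lemma is_derive_Rplus f g x df dg : is_derive f x df -> is_derive g x dg ->
  is_derive (fun x => f x + g x) x (df + dg).
Proof. apply (is_derive_plus (K := R_AbsRing) (V := R_NormedModule)). Qed.

Lemma is_derive_Rconst (c x : R) : is_derive (fun _ : R => c) x 0.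
Proof. apply (is_derive_const (K := R_AbsRing) (V := R_NormedModule)). Qed.

Lemma is_derive_Rid (x : R) : is_derive (fun x : R => x) x 1.
Proof. apply (is_derive_id (K := R_AbsRing)). Qed.

Lemma is_derive_eq (f : R -> R) x l l' : is_derive f x l -> l = l' -> is_derive f x l'.
Proof. now intros H <-. Qed.

Lemma cont_1d_is_derive f df : (forall x, is_derive f x (df x)) -> cont_1d f.
Proof.
  intros H x; apply (ex_derive_continuous (K := R_AbsRing) (V := R_NormedModule)).
  eexists; apply H.
Qed.

Lemma is_derive_RInt_upper f a x : cont_1d f -> is_derive (fun x => RInt f a x) x (f x).
Proof.
  intros Hf; apply (is_derive_RInt (V := R_NormedModule) f _ a x); [|apply Hf].
  apply filter_forall; intros y.
  now apply (RInt_correct (V := R_CompleteNormedModule)), ex_RInt_cont_1d.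
Qed.

Lemma RInt_FTC P dP a b :
  (forall x, is_derive P x (dP x)) -> cont_1d dP -> RInt dP a b = P b - P a.
Proof.
  intros HP HdP; apply (is_RInt_unique (V := R_CompleteNormedModule)).
  now apply (is_RInt_derive (V := R_CompleteNormedModule)); intros.
Qed.

Lemma RInt_le_subinterval g a b c d : a <= c -> c <= d -> d <= b -> cont_1d g ->
  (forall x, a <= x <= b -> 0 <= g x) -> RInt g c d <= RInt g a b.
Proof.
  intros Hac Hcd Hdb Hg Hpos.
  assert (Hex : forall u v, ex_RInt g u v) by (intros; now apply ex_RInt_cont_1d).
  rewrite <- (RInt_Chasles (V := R_CompleteNormedModule) g a c b),
    <- (RInt_Chasles (V := R_CompleteNormedModule) g c d b) by auto.
  assert (0 <= RInt g a c) by (apply RInt_ge_0; auto; intros; apply Hpos; lra).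
  assert (0 <= RInt g d b) by (apply RInt_ge_0; auto; intros; apply Hpos; lra).
  simpl; unfold plus; simpl; lra.
Qed.

Lemma abs_le_RInt_abs_derive f df a b x0 x :
  (forall y, is_derive f y (df y)) -> cont_1d df -> f x0 = 0 ->
  a <= x0 <= b -> a <= x <= b -> Rabs (f x) <= RInt (fun y => Rabs (df y)) a b.
Proof.
  intros Hf Hdf H0 Hx0 Hx.
  assert (Habs : cont_1d (fun y => Rabs (df y))).
  { intros y; apply (continuous_comp df Rabs); [apply Hdf | apply continuous_Rabs]. }
  rewrite <- (Rminus_0_r (f x)), <- H0, <- (RInt_FTC f df) by auto.
  destruct (Rle_dec x0 x).
  - eapply Rle_trans; [apply abs_RInt_le; [lra | now apply ex_RInt_cont_1d]|].
    apply RInt_le_subinterval; auto; try lra; intros; apply Rabs_pos.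
  - rewrite RInt_Rswap, Rabs_Ropp by now apply ex_RInt_cont_1d.
    eapply Rle_trans; [apply abs_RInt_le; [lra | now apply ex_RInt_cont_1d]|].
    apply RInt_le_subinterval; auto; try lra; intros; apply Rabs_pos.
Qed.

Lemma cont_2d_const c : cont_2d (fun _ _ => c).
Proof. intros x y; apply continuity_2d_pt_const. Qed.

Lemma cont_2d_fst : cont_2d (fun x _ => x).
Proof. intros x y; apply continuity_2d_pt_id1. Qed.

Lemma cont_2d_snd : cont_2d (fun _ y => y).
Proof. intros x y; apply continuity_2d_pt_id2. Qed.

Lemma cont_2d_plus f g : cont_2d f -> cont_2d g -> cont_2d (fun x y => f x y + g x y).
Proof. intros Hf Hg x y; now apply continuity_2d_pt_plus. Qed.

Lemma cont_2d_minus f g : cont_2d f -> cont_2d g -> cont_2d (fun x y => f x y - g x y).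
Proof. intros Hf Hg x y; now apply continuity_2d_pt_minus. Qed.

Lemma cont_2d_mult f g : cont_2d f -> cont_2d g -> cont_2d (fun x y => f x y * g x y).
Proof. intros Hf Hg x y; now apply continuity_2d_pt_mult. Qed.

Lemma cont_2d_comp1 (phi : R -> R) f :
  (forall x, continuity_pt phi x) -> cont_2d f -> cont_2d (fun x y => phi (f x y)).
Proof. intros Hphi Hf x y; now apply continuity_1d_2d_pt_comp. Qed.

Lemma cont_2d_pow f n : cont_2d f -> cont_2d (fun x y => f x y ^ n).
Proof.
  apply (cont_2d_comp1 (fun x => x ^ n)).
  intros; apply derivable_continuous_pt, derivable_pt_pow.
Qed.

Lemma cont_2d_abs f : cont_2d f -> cont_2d (fun x y => Rabs (f x y)).
Proof. apply cont_2d_comp1; intros; apply Rcontinuity_abs. Qed.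

Lemma cont_2d_sqrt f : cont_2d f -> cont_2d (fun x y => sqrt (f x y)).
Proof. apply cont_2d_comp1; intros; apply continuity_pt_filterlim, continuous_sqrt. Qed.

Lemma cont_2d_swap g : cont_2d g -> cont_2d (fun x y => g y x).
Proof. intros H x y eps; destruct (H y x eps) as [d Hd]; exists d; auto. Qed.

Lemma cont_2d_cont_1d f : cont_1d f -> cont_2d (fun x _ => f x).
Proof.
  intros Hf x y eps.
  destruct (proj2 (continuity_pt_filterlim f x) (Hf x) eps (cond_pos eps)) as [d [Hd H]].
  exists (mkposreal d Hd); intros u v Hu _.
  destruct (Req_dec u x) as [->|Hux].
  - rewrite Rminus_eq_0, Rabs_R0; apply cond_pos.
  - now apply H.
Qed.

Lemma cont_1d_cont_2d_l g y : cont_2d g -> cont_1d (fun x => g x y).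
Proof.
  intros H x; apply continuity_pt_filterlim; intros eps Heps.
  destruct (H x y (mkposreal eps Heps)) as [d Hd].
  exists d; split; [apply cond_pos|]; intros u [_ Hu].
  apply Hd; auto; rewrite Rminus_eq_0, Rabs_R0; apply cond_pos.
Qed.

Lemma cont_1d_cont_2d_r g x : cont_2d g -> cont_1d (fun y => g x y).
Proof. intros H; apply (cont_1d_cont_2d_l (fun y x => g x y)), cont_2d_swap, H. Qed.

Lemma cont_1d_plus f g : cont_1d f -> cont_1d g -> cont_1d (fun x => f x + g x).
Proof.
  intros Hf Hg; apply (cont_1d_cont_2d_l (fun x _ => f x + g x) 0), cont_2d_plus;
    now apply cont_2d_cont_1d.
Qed.

Lemma cont_1d_minus f g : cont_1d f -> cont_1d g -> cont_1d (fun x => f x - g x).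
Proof.
  intros Hf Hg; apply (cont_1d_cont_2d_l (fun x _ => f x - g x) 0), cont_2d_minus;
    now apply cont_2d_cont_1d.
Qed.

Lemma cont_1d_mult f g : cont_1d f -> cont_1d g -> cont_1d (fun x => f x * g x).
Proof.
  intros Hf Hg; apply (cont_1d_cont_2d_l (fun x _ => f x * g x) 0), cont_2d_mult;
    now apply cont_2d_cont_1d.
Qed.

Lemma cont_1d_pow f n : cont_1d f -> cont_1d (fun x => f x ^ n).
Proof.
  intros Hf; apply (cont_1d_cont_2d_l (fun x _ => f x ^ n) 0), cont_2d_pow.
  now apply cont_2d_cont_1d.
Qed.

Lemma cont_1d_abs f : cont_1d f -> cont_1d (fun x => Rabs (f x)).
Proof.
  intros Hf; apply (cont_1d_cont_2d_l (fun x _ => Rabs (f x)) 0), cont_2d_abs.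
  now apply cont_2d_cont_1d.
Qed.

Lemma cont_1d_sqrt f : cont_1d f -> cont_1d (fun x => sqrt (f x)).
Proof.
  intros Hf; apply (cont_1d_cont_2d_l (fun x _ => sqrt (f x)) 0), cont_2d_sqrt.
  now apply cont_2d_cont_1d.
Qed.

Lemma cont_1d_const c : cont_1d (fun _ => c).
Proof. intros x; apply continuous_const. Qed.

Lemma cont_1d_id : cont_1d (fun x => x).
Proof. intros x; apply continuous_id. Qed.

Lemma rpow_ge_0 x p : 0 <= rpow x p.
Proof. unfold rpow; destruct (Rle_dec x 0); [lra | apply Rlt_le, exp_pos]. Qed.

Lemma rpow_continuity p x : 0 < p -> continuity_pt (fun x => rpow x p) x.
Proof.
  intros Hp; apply continuity_pt_filterlim.
  destruct (Rlt_dec 0 x) as [Hx|Hx]; [|destruct (Rlt_dec x 0) as [Hx'|Hx']].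
  - apply (continuous_ext_loc (fun y => rpow y p) (fun y => exp (p * ln y))).
    + apply (locally_interval _ x 0 p_infty); simpl; auto; intros y Hy _.
      unfold rpow; destruct (Rle_dec y 0); [lra | reflexivity].
    + apply (continuous_comp ln (fun u => exp (p * u))); [now apply continuous_ln|].
      apply (continuous_comp (fun u => p * u) exp); [|apply continuous_exp].
      apply (continuous_scal_r (K := R_AbsRing) (V := R_NormedModule) p (fun u => u)).
      apply continuous_id.
  - apply (continuous_ext_loc (fun y => rpow y p) (fun _ => 0)); [|apply continuous_const].
    apply (locally_interval _ x m_infty 0); simpl; auto; intros y _ Hy.
    unfold rpow; destruct (Rle_dec y 0), (Rle_dec x 0); lra.
  - (* at [0], [rpow y p = exp (p ln y) < eps] as soon as [0 < y < exp (ln eps / p)] *)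
    replace x with 0 by lra.
    apply (proj1 (continuity_pt_filterlim (fun y => rpow y p) 0)); intros eps Heps.
    exists (exp (ln eps / p)); split; [apply exp_pos|]; intros y [_ Hy].
    simpl in Hy |- *; unfold R_dist in Hy |- *.
    unfold rpow; destruct (Rle_dec 0 0); [|lra].
    destruct (Rle_dec y 0); [rewrite Rminus_eq_0, Rabs_R0; auto|].
    rewrite Rminus_0_r, Rabs_right in Hy by lra.
    rewrite Rminus_0_r, Rabs_right by (apply Rle_ge, Rlt_le, exp_pos).
    unfold Rpower; rewrite <- (exp_ln eps) by auto; apply exp_increasing.
    assert (ln y < ln eps / p) by (rewrite <- (ln_exp (ln eps / p)); apply ln_increasing; lra).
    apply Rmult_lt_reg_r with (/ p); [now apply Rinv_0_lt_compat|].
    replace (p * ln y * / p) with (ln y) by (field; lra); exact H.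
Qed.

Lemma cont3_comp2 (phi : R -> R -> R) f g :
  cont_2d phi -> cont3 f -> cont3 g -> cont3 (fun r z s => phi (f r z s) (g r z s)).
Proof.
  intros Hphi Hf Hg r z s eps Heps.
  destruct (Hphi (f r z s) (g r z s) (mkposreal eps Heps)) as [d1 Hd1].
  destruct (Hf r z s d1 (cond_pos d1)) as [df [Hdf Hf']].
  destruct (Hg r z s d1 (cond_pos d1)) as [dg [Hdg Hg']].
  exists (Rmin df dg); split; [now apply Rmin_pos|]; intros r' z' s' H1 H2 H3.
  pose proof (Rmin_l df dg); pose proof (Rmin_r df dg).
  apply Hd1; [apply Hf' | apply Hg']; lra.
Qed.

Lemma cont3_comp1 (phi : R -> R) f :
  (forall x, continuity_pt phi x) -> cont3 f -> cont3 (fun r z s => phi (f r z s)).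
Proof.
  intros Hphi Hf; apply (cont3_comp2 (fun x _ => phi x) f f); auto.
  apply cont_2d_cont_1d; intros x; now apply continuity_pt_filterlim.
Qed.

Lemma cont3_const c : cont3 (fun _ _ _ => c).
Proof.
  intros r z s eps Heps; exists 1; split; [lra|]; intros.
  now rewrite Rminus_eq_0, Rabs_R0.
Qed.

Lemma cont3_r : cont3 (fun r _ _ => r).
Proof. intros r z s eps Heps; exists eps; auto. Qed.

Lemma cont3_plus f g : cont3 f -> cont3 g -> cont3 (fun r z s => f r z s + g r z s).
Proof.
  apply (cont3_comp2 Rplus), (cont_2d_plus (fun x _ => x) (fun _ y => y));
    [apply cont_2d_fst | apply cont_2d_snd].
Qed.

Lemma cont3_mult f g : cont3 f -> cont3 g -> cont3 (fun r z s => f r z s * g r z s).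
Proof.
  apply (cont3_comp2 Rmult), (cont_2d_mult (fun x _ => x) (fun _ y => y));
    [apply cont_2d_fst | apply cont_2d_snd].
Qed.

Lemma cont3_pow f n : cont3 f -> cont3 (fun r z s => f r z s ^ n).
Proof.
  apply (cont3_comp1 (fun x => x ^ n)); intros; apply derivable_continuous_pt, derivable_pt_pow.
Qed.

Lemma cont3_abs f : cont3 f -> cont3 (fun r z s => Rabs (f r z s)).
Proof. apply cont3_comp1; intros; apply Rcontinuity_abs. Qed.

Lemma cont3_rpow f p : 0 < p -> cont3 f -> cont3 (fun r z s => rpow (f r z s) p).
Proof. intros Hp; apply (cont3_comp1 (fun x => rpow x p)); intros; now apply rpow_continuity. Qed.

Lemma cont_2d_slice_s f s : cont3 f -> cont_2d (fun r z => f r z s).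
Proof.
  intros H x y eps; destruct (H x y s eps (cond_pos eps)) as [d [Hd H']].
  exists (mkposreal d Hd); intros u v Hu Hv; apply H'; auto.
  now rewrite Rminus_eq_0, Rabs_R0.
Qed.

Lemma cont_2d_slice_z f z : cont3 f -> cont_2d (fun s r => f r z s).
Proof.
  intros H x y eps; destruct (H y z x eps (cond_pos eps)) as [d [Hd H']].
  exists (mkposreal d Hd); intros u v Hu Hv; apply H'; auto.
  now rewrite Rminus_eq_0, Rabs_R0.
Qed.

Lemma cont_2d_slice_r f r : cont3 f -> cont_2d (fun s z => f r z s).
Proof.
  intros H x y eps; destruct (H r y x eps (cond_pos eps)) as [d [Hd H']].
  exists (mkposreal d Hd); intros u v Hu Hv; apply H'; auto.
  now rewrite Rminus_eq_0, Rabs_R0.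
Qed.

Ltac cont_auto := repeat match goal with
  | |- _ => assumption
  | |- ex_RInt _ _ _ => apply ex_RInt_cont_1d
  | |- cont_1d (fun x => @?f x + @?g x) => apply (cont_1d_plus f g)
  | |- cont_1d (fun x => @?f x - @?g x) => apply (cont_1d_minus f g)
  | |- cont_1d (fun x => @?f x * @?g x) => apply (cont_1d_mult f g)
  | |- cont_1d (fun x => (@?f x) ^ ?n) => apply (cont_1d_pow f n)
  | |- cont_1d (fun x => Rabs (@?f x)) => apply (cont_1d_abs f)
  | |- cont_1d (fun x => sqrt (@?f x)) => apply (cont_1d_sqrt f)
  | |- cont_1d (fun _ => ?c) => apply cont_1d_const
  | |- cont_1d (fun x => x) => apply cont_1d_id
  | |- cont_1d (fun x => ?k x ?y) => apply (cont_1d_cont_2d_l k y)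
  | |- cont_1d (fun y => ?k ?x y) => apply (cont_1d_cont_2d_r k x)
  | |- cont_2d (fun u v => @?f u v + @?g u v) => apply (cont_2d_plus f g)
  | |- cont_2d (fun u v => @?f u v - @?g u v) => apply (cont_2d_minus f g)
  | |- cont_2d (fun u v => @?f u v * @?g u v) => apply (cont_2d_mult f g)
  | |- cont_2d (fun u v => (@?f u v) ^ ?n) => apply (cont_2d_pow f n)
  | |- cont_2d (fun u v => Rabs (@?f u v)) => apply (cont_2d_abs f)
  | |- cont_2d (fun u v => sqrt (@?f u v)) => apply (cont_2d_sqrt f)
  | |- cont_2d (fun _ _ => ?c) => apply cont_2d_const
  | |- cont_2d (fun u _ => u) => apply cont_2d_fst
  | |- cont_2d (fun _ v => v) => apply cont_2d_snd
  | |- cont3 (fun r z s => @?f r z s + @?g r z s) => apply (cont3_plus f g)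
  | |- cont3 (fun r z s => @?f r z s * @?g r z s) => apply (cont3_mult f g)
  | |- cont3 (fun r z s => (@?f r z s) ^ ?n) => apply (cont3_pow f n)
  | |- cont3 (fun r z s => Rabs (@?f r z s)) => apply (cont3_abs f)
  | |- cont3 (fun r z s => rpow (@?f r z s) ?p) => apply (cont3_rpow f p); [lra|]
  | |- cont3 (fun _ _ _ => ?c) => apply cont3_const
  | |- cont3 (fun r _ _ => r) => apply cont3_r
  end.

(** * Integrals depending on parameters *)

Lemma cont3_uniform_in_r G a b z s eps : cont3 G -> 0 < eps ->
  exists d, 0 < d /\ forall r z' s', a <= r <= b -> Rabs (z' - z) < d -> Rabs (s' - s) < d ->
    Rabs (G r z' s' - G r z s) < eps.
Proof.
  intros HG He.
  assert (Hd : forall t, {d : posreal | forall r' z' s', Rabs (r' - t) < d ->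
      Rabs (z' - z) < d -> Rabs (s' - s) < d -> Rabs (G r' z' s' - G t z s) < eps / 2}).
  { intros t; apply constructive_indefinite_description.
    destruct (HG t z s (eps / 2)) as [d [Hd H']]; [lra|].
    now exists (mkposreal d Hd). }
  destruct (compactness_value_1d a b (fun t => proj1_sig (Hd t))) as [d Hdd].
  exists d; split; [apply cond_pos|]; intros r z' s' Hr Hz Hs.
  destruct (Rlt_dec (Rabs (G r z' s' - G r z s)) eps) as [ok|nok]; auto.
  exfalso; apply (Hdd r Hr); intros [t [_ [Hrt Hdt]]]; apply nok.
  pose proof (proj2_sig (Hd t)) as Ht; simpl in Ht.
  assert (Hpos := cond_pos (proj1_sig (Hd t))).
  assert (A1 := Ht r z' s' Hrt (Rlt_le_trans _ _ _ Hz Hdt) (Rlt_le_trans _ _ _ Hs Hdt)).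
  assert (A2 := Ht r z s Hrt ltac:(now rewrite Rminus_eq_0, Rabs_R0)
                  ltac:(now rewrite Rminus_eq_0, Rabs_R0)).
  replace (G r z' s' - G r z s) with ((G r z' s' - G t z s) + - (G r z s - G t z s)) by ring.
  eapply Rle_lt_trans; [apply Rabs_triang|]; rewrite Rabs_Ropp; lra.
Qed.

Lemma cont_2d_RInt_param_le G a b : cont3 G -> a <= b ->
  cont_2d (fun z s => RInt (fun r => G r z s) a b).
Proof.
  intros HG Hab z s eps.
  set (e := eps / (b - a + 1)).
  assert (He : 0 < e) by (apply Rdiv_lt_0_compat; [apply cond_pos | lra]).
  destruct (cont3_uniform_in_r G a b z s e HG He) as [d [Hd Hu]].
  exists (mkposreal d Hd); simpl; intros u v Hzu Hsv.
  assert (E1 := cont_1d_cont_2d_l _ u (cont_2d_slice_s G v HG)).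
  assert (E2 := cont_1d_cont_2d_l _ z (cont_2d_slice_s G s HG)); simpl in E1, E2.
  rewrite <- RInt_Rminus by now apply ex_RInt_cont_1d.
  eapply Rle_lt_trans.
  { apply abs_RInt_le_const; auto.
    - apply ex_RInt_Rminus; now apply ex_RInt_cont_1d.
    - intros r Hr; apply Rlt_le, Hu; auto. }
  assert (0 < eps) by apply cond_pos.
  unfold e; apply Rmult_lt_reg_r with (b - a + 1); [lra|].
  replace ((b - a) * (eps / (b - a + 1)) * (b - a + 1)) with ((b - a) * eps) by (field; lra).
  nra.
Qed.

Lemma cont_2d_RInt_param G a b : cont3 G -> cont_2d (fun z s => RInt (fun r => G r z s) a b).
Proof.
  intros HG; destruct (Rle_dec a b) as [Hab|Hba]; [now apply cont_2d_RInt_param_le|].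
  intros z s; apply continuity_2d_pt_ext with (fun z s => - RInt (fun r => G r z s) b a).
  - intros x y; rewrite RInt_Rswap; [ring|].
    apply ex_RInt_cont_1d, (cont_1d_cont_2d_l (fun r z => G r z y)), cont_2d_slice_s, HG.
  - apply continuity_2d_pt_opp, cont_2d_RInt_param_le; auto; lra.
Qed.

Lemma cont_1d_RInt_param (g : R -> R -> R) a b : cont_2d g -> cont_1d (fun p => RInt (g p) a b).
Proof.
  intros Hg.
  assert (HG : cont3 (fun r z s => g z r)).
  { intros r z s eps Heps; destruct (Hg z r (mkposreal eps Heps)) as [d Hd].
    exists d; split; [apply cond_pos|]; intros; now apply Hd. }
  exact (cont_1d_cont_2d_l _ 0 (cont_2d_RInt_param _ a b HG)).
Qed.

Lemma is_derive_RInt_param_R g gu b c x :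
  (forall u t, is_derive (fun u => g u t) u (gu u t)) -> cont_2d gu ->
  (forall u, ex_RInt (g u) b c) -> is_derive (fun u => RInt (g u) b c) x (RInt (gu x) b c).
Proof.
  intros Hg Hgu Hex.
  assert (H := is_derive_RInt_param g b c x).
  rewrite (RInt_ext (fun t => Derive (fun u => g u t) x) (gu x)) in H
    by (intros t _; apply is_derive_unique, Hg).
  apply H.
  - apply filter_forall; intros y t _; eexists; apply Hg.
  - intros t _; apply continuity_2d_pt_ext with gu; [|apply Hgu].
    intros u v; symmetry; apply is_derive_unique, Hg.
  - apply filter_forall, Hex.
Qed.

(* Both sides are antiderivatives in [b] of [x |-> RInt (g x) c d] vanishing at [b = a]. *)
Lemma RInt_fubini g a b c d : cont_2d g ->
  RInt (fun z => RInt (fun r => g r z) a b) c d = RInt (fun r => RInt (fun z => g r z) c d) a b.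
Proof.
  intros Hg.
  set (k := fun x => RInt (fun z => g x z) c d).
  assert (Hk : cont_1d k) by now apply (cont_1d_RInt_param g).
  assert (Hinner : forall x z, is_derive (fun y => RInt (fun r => g r z) a y) x (g x z))
    by (intros x z; apply (is_derive_RInt_upper (fun r => g r z)), cont_1d_cont_2d_l, Hg).
  assert (DPhi : forall x,
    is_derive (fun x => RInt (fun z => RInt (fun r => g r z) a x) c d) x (k x)).
  { intros x; apply (is_derive_RInt_param_R (fun x z => RInt (fun r => g r z) a x) g); auto.
    intros y; apply ex_RInt_cont_1d.
    now apply (cont_1d_RInt_param (fun z r => g r z)), cont_2d_swap. }
  assert (DPsi : forall x, is_derive (fun x => RInt k a x) x (k x))
    by (intros; now apply is_derive_RInt_upper).
  assert (H0 : forall x, is_derive (fun x => RInt (fun z => RInt (fun r => g r z) a x) c d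
                                            - RInt k a x) x 0).
  { intros x; replace 0 with (k x - k x) by ring.
    now apply (is_derive_minus (K := R_AbsRing) (V := R_NormedModule)). }
  assert (E := RInt_FTC _ _ a b H0 ltac:(intros x; apply continuous_const)).
  rewrite RInt_Rconst, RInt_Rpoint, (RInt_ext (fun z => RInt (fun r => g r z) a a) (fun _ => 0)),
    RInt_Rconst in E
    by (intros; apply RInt_Rpoint).
  unfold k in *; match goal with |- ?x = ?y => change (@eq R x y) end; lra.
Qed.

(** * Integrals over the meridian rectangle *)

Definition rect_int (Rr a : R) (g : R -> R -> R) : R :=
  RInt (fun z => RInt (fun r => g r z) 0 Rr) (- a) a.

Lemma int_Omega_rect_int Rr a g :
  int_Omega Rr a g = 2 * PI * rect_int Rr a (fun r z => g r z * r).
Proof. reflexivity. Qed.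

Lemma le_mult_of_quadratic_bound Y A C : 0 <= Y -> 0 <= A -> 0 <= C ->
  (forall l, 0 < l -> 2 * l * Y <= l * l * A + C) -> Y * Y <= A * C.
Proof.
  intros HY HA HC H.
  destruct (Req_dec Y 0) as [->|HY0]; [nra|].
  destruct (Req_dec A 0) as [->|HA0].
  - exfalso; assert (Hl := H ((C + 1) / (2 * Y)) ltac:(apply Rdiv_lt_0_compat; lra)).
    replace (2 * ((C + 1) / (2 * Y)) * Y) with (C + 1) in Hl by (field; lra); lra.
  - assert (Hl := H (Y / A) ltac:(apply Rdiv_lt_0_compat; lra)).
    replace (2 * (Y / A) * Y) with (2 * (Y * Y) / A) in Hl by (field; lra).
    replace (Y / A * (Y / A) * A) with (Y * Y / A) in Hl by (field; lra).
    apply Rmult_le_reg_r with (/ A); [apply Rinv_0_lt_compat; lra|].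
    replace (A * C * / A) with C by (field; lra); lra.
Qed.

Lemma scaled_abs_mult_le l x y w : 0 < l -> 0 <= w ->
  2 * l * (Rabs (x * y) * w) <= l * l * (x ^ 2 * w) + y ^ 2 * w.
Proof.
  intros Hl Hw; rewrite Rabs_mult, <- (pow2_abs x), <- (pow2_abs y).
  assert (0 <= (l * Rabs x - Rabs y) ^ 2 * w) by (apply Rmult_le_pos; [apply pow2_ge_0 | lra]).
  nra.
Qed.

Lemma RInt_cauchy_schwarz f g b : 0 <= b -> cont_1d f -> cont_1d g ->
  RInt (fun r => Rabs (f r * g r) * r) 0 b ^ 2 <=
  RInt (fun r => f r ^ 2 * r) 0 b * RInt (fun r => g r ^ 2 * r) 0 b.
Proof.
  intros Hb Hf Hg; rewrite <- Rsqr_pow2 at 1; apply le_mult_of_quadratic_bound.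
  - apply RInt_ge_0; [lra | cont_auto | intros; apply Rmult_le_pos; [apply Rabs_pos | lra]].
  - apply RInt_ge_0; [lra | cont_auto | intros; apply Rmult_le_pos; [apply pow2_ge_0 | lra]].
  - apply RInt_ge_0; [lra | cont_auto | intros; apply Rmult_le_pos; [apply pow2_ge_0 | lra]].
  - intros l Hl; rewrite <- !RInt_Rmult_l, <- RInt_Rplus by cont_auto.
    apply RInt_le; [lra | cont_auto | cont_auto | intros; apply scaled_abs_mult_le; lra].
Qed.

Section RectangleIntegral.

Variables Rr a : R.
Hypotheses (HRr : 0 <= Rr) (Ha : 0 <= a).

Lemma cont_1d_RInt_inner g b c : cont_2d g -> cont_1d (fun z => RInt (fun r => g r z) b c).
Proof. intros H; apply (cont_1d_RInt_param (fun z r => g r z)), cont_2d_swap, H. Qed.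

Lemma ex_RInt_rect_outer g : cont_2d g -> ex_RInt (fun z => RInt (fun r => g r z) 0 Rr) (- a) a.
Proof. intros H; now apply ex_RInt_cont_1d, cont_1d_RInt_inner. Qed.

Lemma ex_RInt_rect_inner g z b c : cont_2d g -> ex_RInt (fun r => g r z) b c.
Proof. intros H; now apply ex_RInt_cont_1d, cont_1d_cont_2d_l. Qed.

Lemma rect_int_plus f g : cont_2d f -> cont_2d g ->
  rect_int Rr a (fun r z => f r z + g r z) = rect_int Rr a f + rect_int Rr a g.
Proof.
  intros Hf Hg; unfold rect_int; rewrite <- RInt_Rplus by now apply ex_RInt_rect_outer.
  apply RInt_ext; intros; apply RInt_Rplus; now apply ex_RInt_rect_inner.
Qed.

Lemma rect_int_scal c f : cont_2d f ->
  rect_int Rr a (fun r z => c * f r z) = c * rect_int Rr a f.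
Proof.
  intros Hf; unfold rect_int; rewrite <- RInt_Rmult_l by now apply ex_RInt_rect_outer.
  apply RInt_ext; intros; apply RInt_Rmult_l; now apply ex_RInt_rect_inner.
Qed.

Lemma rect_int_ext f g : (forall r z, 0 < r < Rr -> - a < z < a -> f r z = g r z) ->
  rect_int Rr a f = rect_int Rr a g.
Proof.
  intros E; apply RInt_ext; intros z Hz; apply RInt_ext; intros r Hr.
  rewrite Rmin_left, Rmax_right in Hz, Hr by lra; apply E; lra.
Qed.

Lemma rect_int_le f g : cont_2d f -> cont_2d g ->
  (forall r z, 0 < r < Rr -> - a < z < a -> f r z <= g r z) ->
  rect_int Rr a f <= rect_int Rr a g.
Proof.
  intros Hf Hg E; apply RInt_le; try lra; try now apply ex_RInt_rect_outer.
  intros z Hz; apply RInt_le; try lra; try now apply ex_RInt_rect_inner.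
  intros; apply E; lra.
Qed.

Lemma rect_int_ge_0 f : cont_2d f ->
  (forall r z, 0 < r < Rr -> - a < z < a -> 0 <= f r z) -> 0 <= rect_int Rr a f.
Proof.
  intros Hf E.
  apply RInt_ge_0; try lra; [now apply ex_RInt_rect_outer|]; intros z Hz.
  apply RInt_ge_0; try lra; [now apply ex_RInt_rect_inner|]; intros; apply E; lra.
Qed.

Lemma rect_int_fubini g : cont_2d g ->
  rect_int Rr a g = RInt (fun r => RInt (fun z => g r z) (- a) a) 0 Rr.
Proof. apply RInt_fubini. Qed.

Lemma rect_int_derive_r P Q : (forall r z, is_derive (fun r => P r z) r (Q r z)) -> cont_2d Q ->
  rect_int Rr a Q = RInt (fun z => P Rr z - P 0 z) (- a) a.
Proof.
  intros HP HQ; apply RInt_ext; intros z _.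
  apply (RInt_FTC (fun r => P r z)); auto; now apply cont_1d_cont_2d_l.
Qed.

Lemma rect_int_derive_r_vanish P Q :
  (forall r z, is_derive (fun r => P r z) r (Q r z)) -> cont_2d Q ->
  (forall z, - a < z < a -> P Rr z = 0 /\ P 0 z = 0) -> rect_int Rr a Q = 0.
Proof.
  intros HP HQ H0; rewrite (rect_int_derive_r P Q HP HQ), (RInt_ext _ (fun _ => 0)).
  - rewrite RInt_Rconst; simpl; ring.
  - intros z Hz; rewrite Rmin_left, Rmax_right in Hz by lra.
    destruct (H0 z Hz) as [-> ->]; simpl; ring.
Qed.

Lemma rect_int_derive_z_vanish P Q :
  (forall r z, is_derive (fun z => P r z) z (Q r z)) -> cont_2d Q ->
  (forall r, 0 < r < Rr -> P r a = 0 /\ P r (- a) = 0) -> rect_int Rr a Q = 0.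
Proof.
  intros HP HQ H0; rewrite rect_int_fubini by auto; rewrite (RInt_ext _ (fun _ => 0)).
  - rewrite RInt_Rconst; simpl; ring.
  - intros r Hr; rewrite Rmin_left, Rmax_right in Hr by lra.
    rewrite (RInt_FTC (fun z => P r z) (Q r)) by (auto; now apply cont_1d_cont_2d_r).
    destruct (H0 r Hr) as [-> ->]; simpl; ring.
Qed.

Lemma rect_int_cauchy_schwarz f g : cont_2d f -> cont_2d g ->
  rect_int Rr a (fun r z => Rabs (f r z * g r z) * r) ^ 2 <=
  rect_int Rr a (fun r z => f r z ^ 2 * r) * rect_int Rr a (fun r z => g r z ^ 2 * r).
Proof.
  intros Hf Hg; rewrite <- Rsqr_pow2 at 1; apply le_mult_of_quadratic_bound.
  - apply rect_int_ge_0; [cont_auto|]; intros; apply Rmult_le_pos; [apply Rabs_pos | lra].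
  - apply rect_int_ge_0; [cont_auto|]; intros; apply Rmult_le_pos; [apply pow2_ge_0 | lra].
  - apply rect_int_ge_0; [cont_auto|]; intros; apply Rmult_le_pos; [apply pow2_ge_0 | lra].
  - intros l Hl; rewrite <- (rect_int_scal (2 * l)), <- (rect_int_scal (l * l)), <- rect_int_plus
      by cont_auto.
    apply rect_int_le; [cont_auto | cont_auto|]; intros; apply scaled_abs_mult_le; lra.
Qed.

End RectangleIntegral.

(** * A Sobolev inequality on the meridian rectangle *)

Lemma is_derive_RInt_lower g b x : cont_1d g -> is_derive (fun x => RInt g x b) x (- g x).
Proof.
  intros Hg; apply (is_derive_ext (fun x => - RInt g b x)).
  - intros y; rewrite (RInt_Rswap g y b) by (now apply ex_RInt_cont_1d); simpl; ring.
  - now apply (is_derive_opp (K := R_AbsRing) (V := R_NormedModule)), is_derive_RInt_upper.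
Qed.

Lemma cont_1d_RInt_lower g b : cont_1d g -> cont_1d (fun x => RInt g x b).
Proof.
  intros Hg; apply (cont_1d_is_derive _ (fun x => - g x)); intros; now apply is_derive_RInt_lower.
Qed.

Lemma RInt_RInt_tail g b : cont_1d g ->
  RInt (fun r => RInt g r b) 0 b = RInt (fun r => g r * r) 0 b.
Proof.
  intros Hg; assert (Ctail := cont_1d_RInt_lower g b Hg).
  assert (D : forall r, is_derive (fun r => r * RInt g r b) r (RInt g r b - g r * r)).
  { intros r; eapply is_derive_eq;
      [apply is_derive_Rmult; [apply is_derive_Rid | now apply is_derive_RInt_lower]
      | simpl; ring]. }
  assert (K := RInt_FTC _ _ 0 b D ltac:(cont_auto)).
  rewrite RInt_Rminus, !RInt_Rpoint in K by cont_auto.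
  simpl in K; lra.
Qed.

Lemma mult_RInt_tail_le g b r : cont_1d g -> (forall x, 0 <= g x) -> 0 <= r <= b ->
  r * RInt g r b <= RInt (fun t => g t * t) 0 b.
Proof.
  intros Hg Hpos Hr; rewrite <- RInt_Rmult_l by cont_auto.
  apply Rle_trans with (RInt (fun t => g t * t) r b).
  - apply RInt_le; [lra | cont_auto | cont_auto|].
    intros x Hx; rewrite Rmult_comm; apply Rmult_le_compat_l; [apply Hpos | lra].
  - apply RInt_le_subinterval; try lra; [cont_auto|].
    intros x Hx; apply Rmult_le_pos; [apply Hpos | lra].
Qed.

(* With [Gam r = RInt |f'| r b] and [M = RInt (|f'| r) 0 b] one has [|f r| <= Gam r],
   [r Gam r <= M] and [RInt Gam 0 b = M]. *)
Lemma radial_L2_le_sqr_L1_derive f df b : 0 <= b ->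
  (forall x, is_derive f x (df x)) -> cont_1d df -> f b = 0 ->
  RInt (fun r => f r ^ 2 * r) 0 b <= RInt (fun r => Rabs (df r) * r) 0 b ^ 2.
Proof.
  intros Hb Hf Hdf Hfb.
  set (g := fun t => Rabs (df t)); assert (Hg : cont_1d g) by (unfold g; cont_auto).
  set (M := RInt (fun r => g r * r) 0 b); set (Gam := fun r => RInt g r b).
  assert (Cf := cont_1d_is_derive f df Hf); assert (CGam := cont_1d_RInt_lower g b Hg).
  assert (HfG : forall r, 0 <= r <= b -> Rabs (f r) <= Gam r)
    by (intros; apply (abs_le_RInt_abs_derive f df r b b r); auto; lra).
  assert (HrG : forall r, 0 <= r <= b -> r * Gam r <= M)
    by (intros; apply mult_RInt_tail_le; auto; intros; apply Rabs_pos).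
  apply Rle_trans with (RInt (fun r => M * Gam r) 0 b).
  - apply RInt_le; [lra | cont_auto | cont_auto|]; intros r Hr.
    rewrite <- (pow2_abs (f r)).
    assert (A1 := HfG r ltac:(lra)); assert (A2 := HrG r ltac:(lra)).
    assert (0 <= Rabs (f r)) by apply Rabs_pos.
    assert (Rabs (f r) ^ 2 * r <= Rabs (f r) * (r * Gam r)).
    { replace (Rabs (f r) ^ 2 * r) with (Rabs (f r) * (r * Rabs (f r))) by ring.
      apply Rmult_le_compat_l, Rmult_le_compat_l; lra. }
    assert (Rabs (f r) * (r * Gam r) <= Rabs (f r) * M) by now apply Rmult_le_compat_l.
    assert (Rabs (f r) * M <= Gam r * M) by (apply Rmult_le_compat_r; nra); lra.
  - rewrite RInt_Rmult_l by cont_auto.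
    unfold Gam; rewrite RInt_RInt_tail by exact Hg; right; unfold M, g; simpl; ring.
Qed.

Lemma interpolation_bound B G P H : 0 <= B -> 0 <= G -> 0 <= P -> 0 <= H ->
  B <= sqrt H * P -> P ^ 2 <= 16 * (B * G) -> H ^ 2 <= 16 * (B * G) -> B <= 4096 * G ^ 3.
Proof.
  intros HB HG HP HH H1 H2 H3; simpl in H2, H3.
  set (S := sqrt (B * G)).
  assert (HS : S * S = B * G) by (apply sqrt_sqrt; nra).
  assert (HS0 : 0 <= S) by apply sqrt_pos.
  assert (H4 : H <= 4 * S) by nra.
  assert (H5 : B * B <= H * (P * P)).
  { assert (sqrt H * sqrt H = H) by now apply sqrt_sqrt.
    assert (0 <= sqrt H) by apply sqrt_pos; nra. }
  assert (H6 : B * B <= 64 * (S * S * S)) by nra.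
  destruct (Req_dec B 0) as [->|HB0]; [nra|].
  assert (H7 : (B * B) * (B * B) <= 4096 * ((S * S) * (S * S) * (S * S))).
  { replace (4096 * (S * S * (S * S) * (S * S))) with ((64 * (S * S * S)) * (64 * (S * S * S)))
      by ring.
    apply Rmult_le_compat; nra. }
  rewrite HS in H7.
  assert (H8 : B * (B * B * B) <= B * (4096 * (G * G * G) * (B * B))) by nra.
  apply Rmult_le_reg_l in H8; [|lra].
  assert (0 < B * B) by nra; simpl; nra.
Qed.

Section Sobolev.

Variables (Rr a : R) (W Wr Wz : R -> R -> R).
Hypotheses (HRr : 0 <= Rr) (Ha : 0 <= a)
  (HWr : forall r z, is_derive (fun r => W r z) r (Wr r z))
  (HWz : forall r z, is_derive (fun z => W r z) z (Wz r z))
  (CW : cont_2d W) (CWr : cont_2d Wr) (CWz : cont_2d Wz)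
  (HW_side : forall z, - a <= z <= a -> W Rr z = 0)
  (HW_ends : forall r, 0 <= r <= Rr -> W r a = 0 /\ W r (- a) = 0).

Let W4r r z := 4 * (W r z ^ 3 * Wr r z).
Let W4z r z := 4 * (W r z ^ 3 * Wz r z).
Let h r := RInt (fun z => Rabs (W4z r z)) (- a) a.
Let B := rect_int Rr a (fun r z => W r z ^ 6 * r).
Let G := rect_int Rr a (fun r z => (Wr r z ^ 2 + Wz r z ^ 2) * r).

Let CW4r : cont_2d W4r. Proof. unfold W4r; cont_auto. Qed.
Let CW4z : cont_2d W4z. Proof. unfold W4z; cont_auto. Qed.
Let Ch : cont_1d h. Proof. apply (cont_1d_RInt_param (fun r z => Rabs (W4z r z))); cont_auto. Qed.

Let h_ge_0 r : 0 <= h r.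
Proof. apply RInt_ge_0; [lra | cont_auto | intros; apply Rabs_pos]. Qed.

Lemma pow4_le_RInt_abs_derive_z r z : 0 <= r <= Rr -> - a <= z <= a -> W r z ^ 4 <= h r.
Proof.
  intros Hr Hz; eapply Rle_trans; [apply Rle_abs|].
  apply (abs_le_RInt_abs_derive (fun z => W r z ^ 4) (W4z r) (- a) a (- a)); try lra.
  - intros y; eapply is_derive_eq; [apply is_derive_pow, HWz | unfold W4z; simpl; ring].
  - now apply cont_1d_cont_2d_r.
  - simpl; rewrite (proj2 (HW_ends r Hr)); ring.
Qed.

(* Cauchy--Schwarz against [h], then the radial inequality for [W ^ 4]. *)
Lemma sobolev_slice z : - a < z < a ->
  RInt (fun r => W r z ^ 6 * r) 0 Rr <=
  RInt (fun r => Rabs (W4r r z) * r) 0 Rr * sqrt (RInt (fun r => h r * r) 0 Rr).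
Proof.
  intros Hz.
  set (Y := RInt (fun r => Rabs (W r z ^ 4 * sqrt (h r)) * r) 0 Rr).
  set (M := RInt (fun r => Rabs (W4r r z) * r) 0 Rr).
  set (H := RInt (fun r => h r * r) 0 Rr).
  assert (HY : RInt (fun r => W r z ^ 6 * r) 0 Rr <= Y).
  { apply RInt_le; auto; [cont_auto | cont_auto|]; intros r Hr.
    assert (K : W r z ^ 2 <= sqrt (h r)).
    { rewrite <- (sqrt_pow2 (W r z ^ 2)) by apply pow2_ge_0; apply sqrt_le_1_alt.
      replace ((W r z ^ 2) ^ 2) with (W r z ^ 4) by ring.
      apply pow4_le_RInt_abs_derive_z; lra. }
    assert (0 <= W r z ^ 4)
      by (replace (W r z ^ 4) with ((W r z ^ 2) ^ 2) by ring; apply pow2_ge_0).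
    rewrite Rabs_right by (apply Rle_ge, Rmult_le_pos; auto; apply sqrt_pos).
    replace (W r z ^ 6 * r) with (W r z ^ 4 * W r z ^ 2 * r) by ring.
    apply Rmult_le_compat_r; [lra|]; apply Rmult_le_compat_l; auto. }
  assert (HY2 : Y ^ 2 <= M ^ 2 * H).
  { eapply Rle_trans; [apply RInt_cauchy_schwarz; auto; cont_auto|].
    rewrite (RInt_ext (fun r => sqrt (h r) ^ 2 * r) (fun r => h r * r))
      by (intros; now rewrite pow2_sqrt).
    apply Rmult_le_compat_r.
    - apply RInt_ge_0; auto; [cont_auto | intros; apply Rmult_le_pos; auto; lra].
    - apply (radial_L2_le_sqr_L1_derive (fun r => W r z ^ 4) (fun r => W4r r z));
        auto; [|cont_auto|].
      + intros r; eapply is_derive_eq;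
          [apply (is_derive_pow (fun r => W r z)), HWr | unfold W4r; simpl; ring].
      + simpl; rewrite HW_side by lra; ring. }
  assert (0 <= Y)
    by (apply RInt_ge_0; auto; [cont_auto | intros; apply Rmult_le_pos; [apply Rabs_pos | lra]]).
  assert (0 <= M)
    by (apply RInt_ge_0; auto; [cont_auto | intros; apply Rmult_le_pos; [apply Rabs_pos | lra]]).
  assert (0 <= H) by (apply RInt_ge_0; auto; [cont_auto | intros; apply Rmult_le_pos; auto; lra]).
  assert (sqrt H * sqrt H = H) by now apply sqrt_sqrt.
  assert (0 <= sqrt H) by apply sqrt_pos.
  apply Rle_trans with Y; auto; apply Rsqr_incr_0_var; unfold Rsqr; nra.
Qed.

Lemma sobolev_cauchy_schwarz X : cont_2d X -> rect_int Rr a (fun r z => X r z ^ 2 * r) <= G ->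
  rect_int Rr a (fun r z => Rabs (4 * (W r z ^ 3 * X r z)) * r) ^ 2 <= 16 * (B * G).
Proof.
  intros CX HX.
  rewrite (rect_int_ext Rr a HRr Ha _ (fun r z => 4 * (Rabs (W r z ^ 3 * X r z) * r))) by
    (auto; intros; rewrite Rabs_mult, (Rabs_right 4) by lra; ring).
  rewrite rect_int_scal by cont_auto.
  assert (K := rect_int_cauchy_schwarz Rr a HRr Ha (fun r z => W r z ^ 3) X ltac:(cont_auto) CX).
  cbv beta in K.
  rewrite (rect_int_ext Rr a HRr Ha (fun r z => (W r z ^ 3) ^ 2 * r) (fun r z => W r z ^ 6 * r))
    in K
    by (auto; intros; ring).
  assert (0 <= B).
  { apply rect_int_ge_0; auto; [cont_auto|]; intros r z Hr _.
    replace (W r z ^ 6 * r) with ((W r z ^ 3) ^ 2 * r) by ring.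
    apply Rmult_le_pos; [apply pow2_ge_0 | lra]. }
  assert (0 <= rect_int Rr a (fun r z => X r z ^ 2 * r))
    by (apply rect_int_ge_0; auto; [cont_auto|];
        intros; apply Rmult_le_pos; [apply pow2_ge_0 | lra]).
  fold B in K; nra.
Qed.

(* Integrating [sobolev_slice] over [z] gives [B <= sqrt H * P]; both [P] and [H]
   are controlled by [sobolev_cauchy_schwarz]. *)
Theorem sobolev_rect : B <= 4096 * G ^ 3.
Proof.
  set (H := RInt (fun r => h r * r) 0 Rr).
  set (P := rect_int Rr a (fun r z => Rabs (W4r r z) * r)).
  assert (HH : H = rect_int Rr a (fun r z => Rabs (W4z r z) * r)).
  { rewrite rect_int_fubini by (auto; cont_auto); apply RInt_ext; intros r _; unfold h.
    rewrite Rmult_comm, <- RInt_Rmult_l by cont_auto; apply RInt_ext; intros; simpl; ring. }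
  assert (HBP : B <= sqrt H * P).
  { unfold B, P, rect_int; rewrite <- RInt_Rmult_l by now apply ex_RInt_rect_outer; cont_auto.
    apply RInt_le; try lra; [apply ex_RInt_rect_outer; cont_auto | |].
    - apply ex_RInt_Rmult_l, ex_RInt_rect_outer; cont_auto.
    - intros z Hz; rewrite Rmult_comm; apply sobolev_slice; lra. }
  assert (HWr_G : rect_int Rr a (fun r z => Wr r z ^ 2 * r) <= G)
    by (apply rect_int_le; auto; [cont_auto | cont_auto | intros; nra]).
  assert (HWz_G : rect_int Rr a (fun r z => Wz r z ^ 2 * r) <= G)
    by (apply rect_int_le; auto; [cont_auto | cont_auto | intros; nra]).
  apply (interpolation_bound B G P H).
  - apply rect_int_ge_0; auto; [cont_auto|]; intros r z Hr _.
    replace (W r z ^ 6 * r) with ((W r z ^ 3) ^ 2 * r) by ring.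
    apply Rmult_le_pos; [apply pow2_ge_0 | lra].
  - apply rect_int_ge_0; auto; [cont_auto|]; intros; apply Rmult_le_pos; [nra | lra].
  - apply rect_int_ge_0; auto; [cont_auto|]; intros; apply Rmult_le_pos; [apply Rabs_pos | lra].
  - rewrite HH; apply rect_int_ge_0; auto; [cont_auto|].
    intros; apply Rmult_le_pos; [apply Rabs_pos | lra].
  - exact HBP.
  - now apply sobolev_cauchy_schwarz.
  - rewrite HH; now apply sobolev_cauchy_schwarz.
Qed.

End Sobolev.

(** * Young's inequality with exponents 6/5 and 6 *)

Lemma exp_convex t x y : 0 <= t <= 1 ->
  exp (t * x + (1 - t) * y) <= t * exp x + (1 - t) * exp y.
Proof.
  intros Ht; set (m := t * x + (1 - t) * y).
  assert (Hm := exp_pos m).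
  assert (E : forall v, exp (v - m) = exp v / exp m)
    by (intros; unfold Rminus; rewrite exp_plus, exp_Ropp; field; lra).
  assert (1 + (x - m) <= exp x / exp m) by (rewrite <- E; apply exp_ineq1_le).
  assert (1 + (y - m) <= exp y / exp m) by (rewrite <- E; apply exp_ineq1_le).
  assert (t * (1 + (x - m)) + (1 - t) * (1 + (y - m)) = 1) by (unfold m; ring).
  assert (t * (exp x / exp m) + (1 - t) * (exp y / exp m) >= 1) by nra.
  replace (t * exp x + (1 - t) * exp y)
    with (exp m * (t * (exp x / exp m) + (1 - t) * (exp y / exp m))) by (field; lra).
  nra.
Qed.

(* [a b = exp (5/6 x + 1/6 y)] with [exp x = a^(6/5) / m] and [exp y = m^5 b^6]. *)
Lemma young_6_5 a b m : 0 <= a -> 0 <= b -> 0 < m ->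
  a * b <= 5 / 6 * rpow a (6 / 5) / m + 1 / 6 * m ^ 5 * b ^ 6.
Proof.
  intros Ha Hb Hm.
  assert (0 <= m ^ 5 * b ^ 6) by (apply Rmult_le_pos; apply pow_le; lra).
  assert (0 <= 5 / 6 * rpow a (6 / 5) / m)
    by (apply Rmult_le_pos;
        [assert (Hr := rpow_ge_0 a (6 / 5)); lra | apply Rlt_le, Rinv_0_lt_compat, Hm]).
  destruct (Req_dec a 0) as [->|Ha0]; [nra|].
  destruct (Req_dec b 0) as [->|Hb0]; [nra|].
  unfold rpow; destruct (Rle_dec a 0); [lra|].
  set (x := 6 / 5 * ln a - ln m); set (y := INR 5 * ln m + INR 6 * ln b).
  assert (Ex : exp x = Rpower a (6 / 5) / m)
    by (unfold x, Rminus, Rpower; rewrite exp_plus, exp_Ropp, exp_ln by lra; reflexivity).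
  assert (Ey : exp y = m ^ 5 * b ^ 6)
    by (unfold y; rewrite exp_plus, <- !Rpower_pow by lra; reflexivity).
  replace (a * b) with (exp (5 / 6 * x + (1 - 5 / 6) * y)).
  - eapply Rle_trans; [apply exp_convex; lra|]; rewrite Ex, Ey; right; field; lra.
  - replace (5 / 6 * x + (1 - 5 / 6) * y) with (ln a + ln b) by (unfold x, y; simpl INR; field).
    rewrite exp_plus, !exp_ln; lra.
Qed.

Lemma mult_le_weighted_sqr nu x y : 0 < nu -> x * y <= nu / 4 * y ^ 2 + x ^ 2 / nu.
Proof.
  intros Hnu; assert (0 <= (nu * y / 2 - x) ^ 2) by apply pow2_ge_0.
  apply Rmult_le_reg_l with nu; auto.
  replace (nu * (nu / 4 * y ^ 2 + x ^ 2 / nu)) with (nu * nu / 4 * y ^ 2 + x ^ 2) by (field; lra).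
  nra.
Qed.

Lemma le_0_of_le_pow5_mult X K : 0 <= K -> (forall m, 0 < m -> X <= m ^ 5 * K) -> X <= 0.
Proof.
  intros HK H; destruct (Rle_dec X 0) as [ok|nok]; auto; exfalso.
  set (m := Rmin 1 (X / (2 * (K + 1)))).
  assert (Hm : 0 < m) by (apply Rmin_pos; [lra | apply Rdiv_lt_0_compat; lra]).
  assert (Hm1 : m <= 1) by apply Rmin_l.
  assert (Hm2 : m * (2 * (K + 1)) <= X).
  { apply Rmult_le_reg_r with (/ (2 * (K + 1))); [apply Rinv_0_lt_compat; lra|].
    replace (m * (2 * (K + 1)) * / (2 * (K + 1))) with m by (field; lra); apply Rmin_r. }
  assert (m ^ 4 <= 1) by (rewrite <- (pow1 4); apply pow_incr; lra).
  assert (m ^ 5 <= m) by (replace (m ^ 5) with (m * m ^ 4) by ring; nra).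
  assert (K1 := H m Hm); nra.
Qed.

(* The optimal parameter is [m = A^(1/6) / sqrt G]; the degenerate cases
   [A = 0] and [G = 0] are handled by letting [m] go to [0] or to infinity. *)
Lemma bound_of_young_family X A G N nu : 0 < nu -> 0 <= A -> 0 <= G -> 0 <= N ->
  (0 < A -> Rpower A (1 / 6) ^ 10 <= N) ->
  (forall m, 0 < m -> X <= 5 / 6 * A / m + 1 / 6 * m ^ 5 * (4096 * G ^ 3)) ->
  X <= nu / 4 * G + (5 / 6 + 4096 / 6) ^ 2 / nu * N.
Proof.
  intros Hnu HA HG HN HAN H.
  set (k := 5 / 6 + 4096 / 6).
  assert (0 <= nu / 4 * G + k ^ 2 / nu * N).
  { apply Rplus_le_le_0_compat; [apply Rmult_le_pos; lra|].
    apply Rmult_le_pos; auto; apply Rmult_le_pos; [nra | apply Rlt_le, Rinv_0_lt_compat, Hnu]. }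
  destruct (Req_dec A 0) as [A0|A0]; [|destruct (Req_dec G 0) as [G0|G0]].
  - apply Rle_trans with 0; auto.
    apply (le_0_of_le_pow5_mult X (1 / 6 * (4096 * G ^ 3))).
    { apply Rmult_le_pos; [lra | apply Rmult_le_pos; [lra | now apply pow_le]]. }
    intros m Hm; assert (K := H m Hm); rewrite A0 in K; unfold Rdiv in K.
    rewrite Rmult_0_r, Rmult_0_l, Rplus_0_l in K; lra.
  - apply Rle_trans with 0; auto; destruct (Rle_dec X 0) as [ok|nok]; auto; exfalso.
    assert (K := H ((A + 1) / X) ltac:(apply Rdiv_lt_0_compat; lra)); rewrite G0 in K.
    replace (5 / 6 * A / ((A + 1) / X)) with (5 / 6 * A * X / (A + 1)) in K by (field; lra).
    simpl in K; rewrite !Rmult_0_l, !Rmult_0_r, Rplus_0_r in K.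
    assert (5 / 6 * A * X / (A + 1) < X); [|lra].
    apply Rmult_lt_reg_r with (A + 1); [lra|].
    replace (5 / 6 * A * X / (A + 1) * (A + 1)) with (5 / 6 * A * X) by (field; lra); nra.
  - set (p := Rpower A (1 / 6)); set (q := sqrt G).
    assert (Hp : 0 < p) by apply exp_pos.
    assert (Hq : 0 < q) by (apply sqrt_lt_R0; lra).
    assert (Ep : A = p ^ 6).
    { unfold p; rewrite <- Rpower_pow, Rpower_mult by apply exp_pos.
      replace (1 / 6 * INR 6) with 1 by (simpl; field); rewrite Rpower_1; lra. }
    assert (Eq : G = q ^ 2) by (unfold q; rewrite pow2_sqrt; lra).
    assert (K1 : X <= k * p ^ 5 * q).
    { eapply Rle_trans; [apply (H (p / q)); now apply Rdiv_lt_0_compat|].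
      rewrite Ep, Eq; right; unfold k; field; lra. }
    assert (K2 : k * p ^ 5 * q <= nu / 4 * q ^ 2 + k ^ 2 / nu * p ^ 10).
    { replace (k ^ 2 / nu * p ^ 10) with ((k * p ^ 5) ^ 2 / nu) by (field; lra).
      now apply mult_le_weighted_sqr. }
    assert (k ^ 2 / nu * p ^ 10 <= k ^ 2 / nu * N).
    { apply Rmult_le_compat_l; [|apply HAN; lra].
      apply Rmult_le_pos; [apply pow2_ge_0 | apply Rlt_le, Rinv_0_lt_compat, Hnu]. }
    rewrite <- Eq in K2; lra.
Qed.

Lemma Rpower_sixth_pow10_le A : 0 < A ->
  Rpower A (1 / 6) ^ 10 <= rpow (2 * PI * A) (1 / (6 / 5)) ^ 2.
Proof.
  intros HA; assert (HPI := PI_RGT_0).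
  unfold rpow; destruct (Rle_dec (2 * PI * A) 0); [nra|].
  replace (1 / (6 / 5)) with (5 / 6) by field.
  rewrite <- Rpower_mult_distr by lra.
  assert (P1 : 1 <= Rpower (2 * PI) (5 / 6)).
  { rewrite <- (Rpower_O (2 * PI)) by lra.
    apply Rle_Rpower; [assert (PI / 2 > 1) by apply PI2_1; lra | lra]. }
  assert (P2 : Rpower A (5 / 6) = Rpower A (1 / 6) ^ 5).
  { rewrite <- Rpower_pow, Rpower_mult by apply exp_pos; f_equal; simpl; field. }
  assert (P3 : 0 < Rpower A (5 / 6)) by apply exp_pos.
  replace (Rpower A (1 / 6) ^ 10) with (Rpower A (5 / 6) ^ 2) by (rewrite P2; ring).
  apply pow_incr; split; [lra|].
  rewrite <- (Rmult_1_l (Rpower A (5 / 6))) at 1; apply Rmult_le_compat_r; lra.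
Qed.

(** * The energy inequality on a time slice *)

(* [5/6] and [1/6] are the Young weights, [4096] the constant of [sobolev_rect]. *)
Definition young_sobolev_const : R := 5 / 6 + 4096 / 6.
Definition forcing_const (nu : R) : R := 2 * PI * (young_sobolev_const ^ 2 / nu).

Section SliceEnergy.

Variables (Rr a nu : R) (w wr wz wrr wzz ws vr vrr vz vzz u uz F : R -> R -> R).
Hypotheses (HRr : 0 < Rr) (Ha : 0 < a) (Hnu : 0 < nu)
  (Dwr : forall r z, is_derive (fun r => w r z) r (wr r z))
  (Dwz : forall r z, is_derive (fun z => w r z) z (wz r z))
  (Dwrr : forall r z, is_derive (fun r => wr r z) r (wrr r z))
  (Dwzz : forall r z, is_derive (fun z => wz r z) z (wzz r z))
  (Dvr : forall r z, is_derive (fun r => vr r z) r (vrr r z))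
  (Dvz : forall r z, is_derive (fun z => vz r z) z (vzz r z))
  (Du : forall r z, is_derive (fun z => u r z) z (uz r z))
  (Cw : cont_2d w) (Cwr : cont_2d wr) (Cwz : cont_2d wz) (Cwrr : cont_2d wrr) (Cwzz : cont_2d wzz)
  (Cws : cont_2d ws) (Cvr : cont_2d vr) (Cvrr : cont_2d vrr) (Cvz : cont_2d vz) (Cvzz : cont_2d vzz)
  (Cu : cont_2d u) (Cuz : cont_2d uz) (CF : cont_2d F)
  (Hdiv : forall r z, 0 < r < Rr -> - a < z < a -> vrr r z + vr r z / r + vzz r z = 0)
  (Heq : forall r z, 0 < r < Rr -> - a < z < a ->
     ws r z + (vr r z * wr r z + vz r z * wz r z)
     - nu * (wrr r z + / r * wr r z + wzz r z + 2 / r * wr r z)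
     = 2 * u r z * uz r z + F r z)
  (Hw_side : forall z, - a <= z <= a -> w Rr z = 0)
  (Hw_ends : forall r, 0 <= r <= Rr -> w r a = 0 /\ w r (- a) = 0).

Ltac derive_auto := repeat match goal with
  | |- is_derive (fun x => @?f x * @?g x) _ _ => apply (is_derive_Rmult f g)
  | |- is_derive (fun x => @?f x + @?g x) _ _ => apply (is_derive_Rplus f g)
  | |- is_derive (fun x => x) _ _ => apply is_derive_Rid
  | |- is_derive (fun _ => ?c) _ _ => apply is_derive_Rconst
  | |- is_derive (fun x => w x _) _ _ => apply Dwr
  | |- is_derive (fun x => wr x _) _ _ => apply Dwrr
  | |- is_derive (fun x => vr x _) _ _ => apply Dvr
  | |- is_derive (fun x => w _ x) _ _ => apply Dwz
  | |- is_derive (fun x => wz _ x) _ _ => apply Dwzz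
  | |- is_derive (fun x => vz _ x) _ _ => apply Dvz
  | |- is_derive (fun x => u _ x) _ _ => apply Du
  end.

Let rect_int_ext_slice := rect_int_ext Rr a (Rlt_le _ _ HRr) (Rlt_le _ _ Ha).

(* By [div v = 0] the integrand is half of [div (v w^2)], whose integral vanishes as
   [w = 0] on [S]. *)
Lemma rect_int_transport_vanishes :
  rect_int Rr a (fun r z => (vr r z * wr r z + vz r z * wz r z) * w r z * r) = 0.
Proof.
  assert (K1 : rect_int Rr a (fun r z => (vr r z + r * vrr r z) * (w r z * w r z)
                                        + 2 * (r * vr r z * wr r z * w r z)) = 0).
  { apply (rect_int_derive_r_vanish Rr a (Rlt_le _ _ Ha) (fun r z => r * vr r z * (w r z * w r z))).
    - intros r z; eapply is_derive_eq; [derive_auto | simpl; ring].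
    - cont_auto.
    - intros z Hz; rewrite Hw_side by lra; simpl; split; ring. }
  assert (K2 : rect_int Rr a (fun r z => r * vzz r z * (w r z * w r z)
                                        + 2 * (r * vz r z * wz r z * w r z)) = 0).
  { apply (rect_int_derive_z_vanish Rr a (Rlt_le _ _ HRr)
      (fun r z => r * vz r z * (w r z * w r z))).
    - intros r z; eapply is_derive_eq; [derive_auto | simpl; ring].
    - cont_auto.
    - intros r Hr; destruct (Hw_ends r ltac:(lra)) as [-> ->]; simpl; split; ring. }
  transitivity (1 / 2 * (rect_int Rr a (fun r z => (vr r z + r * vrr r z) * (w r z * w r z)
                                        + 2 * (r * vr r z * wr r z * w r z))
                         + rect_int Rr a (fun r z => r * vzz r z * (w r z * w r z)
                                        + 2 * (r * vz r z * wz r z * w r z))));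
    [|rewrite K1, K2; ring].
  rewrite <- rect_int_plus, <- rect_int_scal by cont_auto.
  apply rect_int_ext_slice; intros r z Hr Hz.
  replace (vzz r z) with (- vrr r z - vr r z / r) by (assert (H := Hdiv r z Hr Hz); lra).
  field; lra.
Qed.

Lemma rect_int_radial_laplacian_by_parts :
  rect_int Rr a (fun r z => (r * wrr r z + wr r z) * w r z)
  = - rect_int Rr a (fun r z => wr r z ^ 2 * r).
Proof.
  assert (K : rect_int Rr a (fun r z => (r * wrr r z + wr r z) * w r z + wr r z ^ 2 * r) = 0).
  { apply (rect_int_derive_r_vanish Rr a (Rlt_le _ _ Ha) (fun r z => r * wr r z * w r z)).
    - intros r z; eapply is_derive_eq; [derive_auto | simpl; ring].
    - cont_auto.
    - intros z Hz; rewrite Hw_side by lra; simpl; split; ring. }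
  rewrite rect_int_plus in K by cont_auto; lra.
Qed.

Lemma rect_int_axial_laplacian_by_parts :
  rect_int Rr a (fun r z => r * wzz r z * w r z) = - rect_int Rr a (fun r z => wz r z ^ 2 * r).
Proof.
  assert (K : rect_int Rr a (fun r z => r * wzz r z * w r z + wz r z ^ 2 * r) = 0).
  { apply (rect_int_derive_z_vanish Rr a (Rlt_le _ _ HRr) (fun r z => r * wz r z * w r z)).
    - intros r z; eapply is_derive_eq; [derive_auto | simpl; ring].
    - cont_auto.
    - intros r Hr; destruct (Hw_ends r ltac:(lra)) as [-> ->]; simpl; split; ring. }
  rewrite rect_int_plus in K by cont_auto; lra.
Qed.

(* The extra term [2/r w_r] of the equation produces the trace of [w] on the axis. *)
Lemma rect_int_axis_term :
  2 * rect_int Rr a (fun r z => wr r z * w r z) = - RInt (fun z => w 0 z ^ 2) (- a) a.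
Proof.
  rewrite <- rect_int_scal, (rect_int_derive_r Rr a (fun r z => w r z * w r z)) by
    (cont_auto || (intros r z; eapply is_derive_eq; [derive_auto | simpl; ring])).
  rewrite (RInt_ext _ (fun z => -1 * w 0 z ^ 2)).
  - rewrite RInt_Rmult_l by cont_auto.
    simpl; ring.
  - intros z Hz; rewrite Rmin_left, Rmax_right in Hz by lra.
    rewrite Hw_side by lra; simpl; ring.
Qed.

Lemma rect_int_source_by_parts :
  2 * rect_int Rr a (fun r z => u r z * uz r z * w r z * r)
  = - rect_int Rr a (fun r z => u r z ^ 2 * wz r z * r).
Proof.
  assert (K : rect_int Rr a (fun r z => 2 * (u r z * uz r z * w r z * r)
                                        + u r z ^ 2 * wz r z * r) = 0).
  { apply (rect_int_derive_z_vanish Rr a (Rlt_le _ _ HRr) (fun r z => r * (u r z * u r z) * w r z)).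
    - intros r z; eapply is_derive_eq; [derive_auto | simpl; ring].
    - cont_auto.
    - intros r Hr; destruct (Hw_ends r ltac:(lra)) as [-> ->]; simpl; split; ring. }
  rewrite rect_int_plus, rect_int_scal in K by cont_auto; lra.
Qed.

Lemma slice_energy_identity :
  rect_int Rr a (fun r z => w r z * ws r z * r) =
  - nu * (rect_int Rr a (fun r z => (wr r z ^ 2 + wz r z ^ 2) * r)
          + RInt (fun z => w 0 z ^ 2) (- a) a)
  - rect_int Rr a (fun r z => u r z ^ 2 * wz r z * r)
  + rect_int Rr a (fun r z => F r z * w r z * r).
Proof.
  rewrite (rect_int_ext_slice _ (fun r z =>
     -1 * ((vr r z * wr r z + vz r z * wz r z) * w r z * r)
     + nu * ((r * wrr r z + wr r z) * w r z + r * wzz r z * w r z + 2 * (wr r z * w r z))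
     + 2 * (u r z * uz r z * w r z * r) + F r z * w r z * r)).
  - rewrite !rect_int_plus, !rect_int_scal, !rect_int_plus, rect_int_scal by cont_auto.
    rewrite rect_int_transport_vanishes, rect_int_radial_laplacian_by_parts,
      rect_int_axial_laplacian_by_parts, rect_int_source_by_parts, rect_int_axis_term.
    rewrite (rect_int_ext_slice (fun r z => (wr r z ^ 2 + wz r z ^ 2) * r)
      (fun r z => wr r z ^ 2 * r + wz r z ^ 2 * r)) by (intros; ring).
    rewrite rect_int_plus by cont_auto.
    ring.
  - intros r z Hr Hz; rewrite (Rmult_comm (w r z)).
    replace (ws r z) with (2 * u r z * uz r z + F r z - (vr r z * wr r z + vz r z * wz r z)
       + nu * (wrr r z + / r * wr r z + wzz r z + 2 / r * wr r z))
      by (assert (H := Heq r z Hr Hz); lra).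
    field; lra.
Qed.

Lemma rect_int_source_le :
  - rect_int Rr a (fun r z => u r z ^ 2 * wz r z * r)
  <= nu / 4 * rect_int Rr a (fun r z => wz r z ^ 2 * r)
     + 1 / nu * rect_int Rr a (fun r z => u r z ^ 4 * r).
Proof.
  replace (- rect_int Rr a (fun r z => u r z ^ 2 * wz r z * r))
    with (-1 * rect_int Rr a (fun r z => u r z ^ 2 * wz r z * r)) by ring.
  rewrite <- !rect_int_scal, <- rect_int_plus by cont_auto.
  apply rect_int_le; try lra; [cont_auto | cont_auto|]; intros r z Hr Hz.
  assert (H := mult_le_weighted_sqr nu (- u r z ^ 2) (wz r z) Hnu).
  replace (-1 * (u r z ^ 2 * wz r z * r)) with (- u r z ^ 2 * wz r z * r) by ring.
  replace (nu / 4 * (wz r z ^ 2 * r) + 1 / nu * (u r z ^ 4 * r))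
    with ((nu / 4 * wz r z ^ 2 + (- u r z ^ 2) ^ 2 / nu) * r) by (field; lra).
  apply Rmult_le_compat_r; lra.
Qed.

(* Young's inequality with a free parameter [m], then [sobolev_rect] for [w ^ 6]. *)
Lemma rect_int_forcing_le :
  rect_int Rr a (fun r z => F r z * w r z * r)
  <= nu / 4 * rect_int Rr a (fun r z => (wr r z ^ 2 + wz r z ^ 2) * r)
     + young_sobolev_const ^ 2 / nu * Lp_Omega Rr a (6 / 5) F ^ 2.
Proof.
  assert (CrF : cont_2d (fun r z => rpow (Rabs (F r z)) (6 / 5))).
  { apply (cont_2d_comp1 (fun x => rpow x (6 / 5)) (fun r z => Rabs (F r z))); [|cont_auto].
    intros; apply rpow_continuity; lra. }
  set (A := rect_int Rr a (fun r z => rpow (Rabs (F r z)) (6 / 5) * r)).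
  assert (HB := sobolev_rect Rr a w wr wz ltac:(lra) ltac:(lra) Dwr Dwz Cw Cwr Cwz Hw_side Hw_ends).
  assert (HB0 : 0 <= rect_int Rr a (fun r z => w r z ^ 6 * r)).
  { apply rect_int_ge_0; try lra; [cont_auto|]; intros r z Hr _.
    replace (w r z ^ 6 * r) with ((w r z ^ 3) ^ 2 * r) by ring.
    apply Rmult_le_pos; [apply pow2_ge_0 | lra]. }
  apply (bound_of_young_family _ A); auto.
  - apply rect_int_ge_0; try lra; [cont_auto|]; intros; apply Rmult_le_pos; [apply rpow_ge_0 | lra].
  - apply rect_int_ge_0; try lra; [cont_auto|]; intros; apply Rmult_le_pos; [nra | lra].
  - apply pow2_ge_0.
  - intros HA; apply Rpower_sixth_pow10_le, HA.
  - intros m Hm.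
    apply Rle_trans with (5 / 6 * A / m + 1 / 6 * m ^ 5 * rect_int Rr a (fun r z => w r z ^ 6 * r)).
    + unfold A, Rdiv at 1; rewrite (Rmult_comm (5 / 6 * _)), <- Rmult_assoc.
      rewrite <- !rect_int_scal, <- rect_int_plus by cont_auto.
      apply rect_int_le; try lra; [cont_auto | cont_auto|]; intros r z Hr Hz.
      assert (Y := young_6_5 (Rabs (F r z)) (Rabs (w r z)) m (Rabs_pos _) (Rabs_pos _) Hm).
      replace (Rabs (w r z) ^ 6) with (w r z ^ 6) in Y
        by (change 6%nat with (2 * 3)%nat; now rewrite !pow_mult, pow2_abs).
      apply Rle_trans with (Rabs (F r z) * Rabs (w r z) * r).
      * rewrite <- Rabs_mult; apply Rmult_le_compat_r; [lra | apply Rle_abs].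
      * apply Rle_trans
          with ((5 / 6 * rpow (Rabs (F r z)) (6 / 5) / m + 1 / 6 * m ^ 5 * w r z ^ 6) * r);
          [apply Rmult_le_compat_r; lra | right; field; lra].
    + assert (0 <= 1 / 6 * m ^ 5) by (apply Rmult_le_pos; [lra | apply pow_le; lra]); nra.
Qed.

Lemma slice_energy_inequality :
  1 / 2 * int_Omega Rr a (fun r z => 2 * (w r z * ws r z))
  + nu / 2 * int_Omega Rr a (fun r z => wr r z ^ 2 + wz r z ^ 2)
  + nu * RInt (fun z => w 0 z ^ 2) (- a) a
  <= 1 / nu * int_Omega Rr a (fun r z => u r z ^ 4)
     + forcing_const nu * Lp_Omega Rr a (6 / 5) F ^ 2.
Proof.
  rewrite !int_Omega_rect_int.
  rewrite (rect_int_ext_slice _ (fun r z => 2 * (w r z * ws r z * r))), rect_int_scal,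
    slice_energy_identity by (cont_auto || (intros; ring)).
  assert (HPI := PI_RGT_0); assert (HPI2 := PI2_1).
  assert (HS := rect_int_source_le); assert (HF := rect_int_forcing_le).
  set (Gz := rect_int Rr a (fun r z => wz r z ^ 2 * r)) in *.
  set (G := rect_int Rr a (fun r z => (wr r z ^ 2 + wz r z ^ 2) * r)) in *.
  assert (HGz : Gz <= G) by (apply rect_int_le; try lra; [cont_auto | cont_auto | intros; nra]).
  assert (HZ : 0 <= RInt (fun z => w 0 z ^ 2) (- a) a)
    by (apply RInt_ge_0; [lra | cont_auto | intros; apply pow2_ge_0]).
  unfold forcing_const.
  assert (2 * PI * - rect_int Rr a (fun r z => u r z ^ 2 * wz r z * r)
          <= 2 * PI * (nu / 4 * Gz + 1 / nu * rect_int Rr a (fun r z => u r z ^ 4 * r)))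
    by (apply Rmult_le_compat_l; lra).
  assert (2 * PI * rect_int Rr a (fun r z => F r z * w r z * r)
          <= 2 * PI * (nu / 4 * G + young_sobolev_const ^ 2 / nu * Lp_Omega Rr a (6 / 5) F ^ 2))
    by (apply Rmult_le_compat_l; lra).
  assert (PI * (nu * Gz) <= PI * (nu * G)) by (apply Rmult_le_compat_l; nra).
  assert (nu * RInt (fun z => w 0 z ^ 2) (- a) a
          <= 2 * PI * (nu * RInt (fun z => w 0 z ^ 2) (- a) a))
    by (assert (0 <= nu * RInt (fun z => w 0 z ^ 2) (- a) a) by nra; nra).
  lra.
Qed.
End SliceEnergy.

(** * Integration in time *)

Lemma RInt_differential_inequality e de g h t : 0 <= t ->
  (forall s, is_derive e s (de s)) -> cont_1d de -> cont_1d g -> cont_1d h ->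
  (forall s, 0 < s < t -> de s + g s <= h s) -> e t + RInt g 0 t <= RInt h 0 t + e 0.
Proof.
  intros Ht He Hde Hg Hh H.
  assert (E := RInt_FTC e de 0 t He Hde).
  assert (Hint : RInt (fun s => de s + g s) 0 t <= RInt h 0 t).
  { apply RInt_le; auto; [apply ex_RInt_Rplus|]; now apply ex_RInt_cont_1d. }
  rewrite RInt_Rplus in Hint by now apply ex_RInt_cont_1d.
  lra.
Qed.

Lemma RInt_lincomb c1 c2 f g a b : cont_1d f -> cont_1d g ->
  RInt (fun s => c1 * f s + c2 * g s) a b = c1 * RInt f a b + c2 * RInt g a b.
Proof.
  intros Hf Hg; apply ex_RInt_cont_1d with (a := a) (b := b) in Hf, Hg.
  rewrite RInt_Rplus, !RInt_Rmult_l by auto using ex_RInt_Rmult_l; reflexivity.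
Qed.

Lemma cont_1d_rect_int_time Rr a g :
  cont3 g -> cont_1d (fun s => rect_int Rr a (fun r z => g r z s)).
Proof.
  intros Hg; apply (cont_1d_RInt_param (fun s z => RInt (fun r => g r z s) 0 Rr)).
  apply (cont_2d_swap (fun z s => RInt (fun r => g r z s) 0 Rr)), cont_2d_RInt_param, Hg.
Qed.

Lemma is_derive_rect_int_time Rr a g gs :
  (forall r z s, is_derive (fun s => g r z s) s (gs r z s)) -> cont3 g -> cont3 gs ->
  forall s, is_derive (fun s => rect_int Rr a (fun r z => g r z s)) s
                      (rect_int Rr a (fun r z => gs r z s)).
Proof.
  intros Hd Cg Cgs s.
  assert (Cin : forall k, cont3 k -> cont_2d (fun s z => RInt (fun r => k r z s) 0 Rr))
    by (intros k Hk; apply (cont_2d_swap (fun z s => RInt (fun r => k r z s) 0 Rr)),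
          cont_2d_RInt_param, Hk).
  apply (is_derive_RInt_param_R (fun s z => RInt (fun r => g r z s) 0 Rr)
                                (fun s z => RInt (fun r => gs r z s) 0 Rr)).
  - intros u z; apply (is_derive_RInt_param_R (fun u r => g r z u) (fun u r => gs r z u)).
    + intros v r; apply Hd.
    + now apply cont_2d_slice_z.
    + intros v; apply ex_RInt_cont_1d, (cont_1d_cont_2d_l (fun r z => g r z v)).
      apply cont_2d_slice_s, Cg.
  - exact (Cin gs Cgs).
  - intros u; apply ex_RInt_cont_1d, (cont_1d_cont_2d_r _ u (Cin g Cg)).
Qed.

Lemma cont_1d_int_Omega_time Rr a g :
  cont3 g -> cont_1d (fun s => int_Omega Rr a (fun r z => g r z s)).
Proof.
  intros Hg; assert (C := cont_1d_rect_int_time Rr a (fun r z s => g r z s * r) ltac:(cont_auto)).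
  apply (cont_1d_cont_2d_l (fun s _ => 2 * PI * rect_int Rr a (fun r z => g r z s * r)) 0).
  apply (cont_2d_mult (fun _ _ => 2 * PI)); [apply cont_2d_const | now apply cont_2d_cont_1d].
Qed.

Lemma is_derive_int_Omega_time Rr a g gs :
  (forall r z s, is_derive (fun s => g r z s) s (gs r z s)) -> cont3 g -> cont3 gs ->
  forall s, is_derive (fun s => int_Omega Rr a (fun r z => g r z s)) s
                      (int_Omega Rr a (fun r z => gs r z s)).
Proof.
  intros Hd Cg Cgs s.
  apply (is_derive_scal (fun s => rect_int Rr a (fun r z => g r z s * r))).
  apply (is_derive_rect_int_time Rr a (fun r z s => g r z s * r) (fun r z s => gs r z s * r));
    [|cont_auto..].
  intros r z u; eapply is_derive_eq;
    [apply (is_derive_Rmult _ (fun _ => r)); [apply Hd | apply is_derive_Rconst] | simpl; ring].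
Qed.

Lemma cont_1d_Lp_Omega_time Rr a p f : 0 < p -> cont3 f ->
  cont_1d (fun s => Lp_Omega Rr a p (fun r z => f r z s)).
Proof.
  intros Hp Hf x; unfold Lp_Omega.
  apply (continuous_comp (fun s => int_Omega Rr a (fun r z => rpow (Rabs (f r z s)) p))
                         (fun y => rpow y (1 / p))).
  - apply (cont_1d_int_Omega_time Rr a (fun r z s => rpow (Rabs (f r z s)) p)); cont_auto.
  - apply continuity_pt_filterlim, rpow_continuity, Rdiv_lt_0_compat; lra.
Qed.

Lemma C1_3_cont f : C1_3 f -> cont3 f.
Proof. now intros [H _]. Qed.

Lemma C1_3_derive_r f : C1_3 f -> forall r z s, is_derive (fun r => f r z s) r (d_r f r z s).
Proof. intros (_ & H & _) r z s; apply Derive_correct, H. Qed.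

Lemma C1_3_derive_z f : C1_3 f -> forall r z s, is_derive (fun z => f r z s) z (d_z f r z s).
Proof. intros (_ & _ & H & _) r z s; apply Derive_correct, H. Qed.

Lemma C1_3_derive_s f : C1_3 f -> forall r z s, is_derive (fun s => f r z s) s (d_s f r z s).
Proof. intros (_ & _ & _ & H & _) r z s; apply Derive_correct, H. Qed.

Lemma C1_3_cont_d_r f : C1_3 f -> cont3 (d_r f).
Proof. now intros (_ & _ & _ & _ & H & _). Qed.

Lemma C1_3_cont_d_z f : C1_3 f -> cont3 (d_z f).
Proof. now intros (_ & _ & _ & _ & _ & H & _). Qed.

Lemma C1_3_cont_d_s f : C1_3 f -> cont3 (d_s f).
Proof. now intros (_ & _ & _ & _ & _ & _ & H). Qed.

Lemma reg2_derive_rr f : reg2 f ->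
  forall r z s, is_derive (fun r => d_r f r z s) r (d_r (d_r f) r z s).
Proof. intros (_ & H & _) r z s; apply Derive_correct, H. Qed.

Lemma reg2_derive_zz f : reg2 f ->
  forall r z s, is_derive (fun z => d_z f r z s) z (d_z (d_z f) r z s).
Proof. intros (_ & _ & H & _) r z s; apply Derive_correct, H. Qed.

Lemma reg2_cont_d_rr f : reg2 f -> cont3 (d_r (d_r f)).
Proof. now intros (_ & _ & _ & H & _). Qed.

Lemma reg2_cont_d_zz f : reg2 f -> cont3 (d_z (d_z f)).
Proof. now intros (_ & _ & _ & _ & H). Qed.

Section EnergyEstimate.

Variables (Rr a nu t : R) (vr vz u1 w1 F1 : field3).
Hypotheses (HRr : 0 < Rr) (Ha : 0 < a) (Hnu : 0 < nu) (Ht : 0 <= t)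
  (Rvr : C1_3 vr) (Rvz : C1_3 vz) (Ru1 : C1_3 u1) (Rw1 : reg2 w1) (CF1 : cont3 F1)
  (Hdiv : forall r z s, 0 < r < Rr -> - a < z < a -> 0 < s < t ->
     d_r vr r z s + vr r z s / r + d_z vz r z s = 0)
  (Heq : forall r z s, 0 < r < Rr -> - a < z < a -> 0 < s < t ->
     d_s w1 r z s + (vr r z s * d_r w1 r z s + vz r z s * d_z w1 r z s)
     - nu * (d_r (d_r w1) r z s + / r * d_r w1 r z s + d_z (d_z w1) r z s
             + 2 / r * d_r w1 r z s)
     = 2 * u1 r z s * d_z u1 r z s + F1 r z s)
  (Hw_side : forall z s, - a <= z <= a -> 0 < s < t -> w1 Rr z s = 0)
  (Hw_ends : forall r s, 0 <= r <= Rr -> 0 < s < t -> w1 r a s = 0 /\ w1 r (- a) s = 0).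

Let Rw1_C1 : C1_3 w1 := proj1 Rw1.

Let energy s := 1 / 2 * int_Omega Rr a (fun r z => w1 r z s ^ 2).
Let energy_rate s := 1 / 2 * int_Omega Rr a (fun r z => 2 * (w1 r z s * d_s w1 r z s)).
Let dissipation s :=
  nu / 2 * int_Omega Rr a (fun r z => d_r w1 r z s ^ 2 + d_z w1 r z s ^ 2)
  + nu * RInt (fun z => w1 0 z s ^ 2) (- a) a.
Let supply s :=
  1 / nu * int_Omega Rr a (fun r z => u1 r z s ^ 4)
  + forcing_const nu * Lp_Omega Rr a (6 / 5) (fun r z => F1 r z s) ^ 2.

Lemma energy_slice_bound s : 0 < s < t -> energy_rate s + dissipation s <= supply s.
Proof.
  intros Hs; unfold energy_rate, dissipation, supply; cbv beta; rewrite <- Rplus_assoc.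
  assert (Sl : forall f, cont3 f -> cont_2d (fun r z => f r z s))
    by (intros; now apply cont_2d_slice_s).
  exact (slice_energy_inequality Rr a nu _ _ _ _ _ (fun r z => d_s w1 r z s) _ _ _ _ _ _ _
    HRr Ha Hnu
    (fun r z => C1_3_derive_r _ Rw1_C1 r z s) (fun r z => C1_3_derive_z _ Rw1_C1 r z s)
    (fun r z => reg2_derive_rr _ Rw1 r z s) (fun r z => reg2_derive_zz _ Rw1 r z s)
    (fun r z => C1_3_derive_r _ Rvr r z s) (fun r z => C1_3_derive_z _ Rvz r z s)
    (fun r z => C1_3_derive_z _ Ru1 r z s)
    (Sl _ (C1_3_cont _ Rw1_C1)) (Sl _ (C1_3_cont_d_r _ Rw1_C1)) (Sl _ (C1_3_cont_d_z _ Rw1_C1))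
    (Sl _ (reg2_cont_d_rr _ Rw1)) (Sl _ (reg2_cont_d_zz _ Rw1)) (Sl _ (C1_3_cont_d_s _ Rw1_C1))
    (Sl _ (C1_3_cont _ Rvr)) (Sl _ (C1_3_cont_d_r _ Rvr)) (Sl _ (C1_3_cont _ Rvz))
    (Sl _ (C1_3_cont_d_z _ Rvz)) (Sl _ (C1_3_cont _ Ru1)) (Sl _ (C1_3_cont_d_z _ Ru1)) (Sl _ CF1)
    (fun r z Hr Hz => Hdiv r z s Hr Hz Hs) (fun r z Hr Hz => Heq r z s Hr Hz Hs)
    (fun z Hz => Hw_side z s Hz Hs) (fun r Hr => Hw_ends r s Hr Hs)).
Qed.

Lemma is_derive_energy s : is_derive energy s (energy_rate s).
Proof.
  apply (is_derive_scal (fun s => int_Omega Rr a (fun r z => w1 r z s ^ 2))).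
  apply (is_derive_int_Omega_time Rr a (fun r z s => w1 r z s ^ 2)
                                    (fun r z s => 2 * (w1 r z s * d_s w1 r z s))).
  - intros r z u; eapply is_derive_eq;
      [apply (is_derive_pow (fun s => w1 r z s)), C1_3_derive_s, Rw1_C1 | simpl; ring].
  - apply cont3_pow, C1_3_cont, Rw1_C1.
  - apply (cont3_mult (fun _ _ _ => 2)); [apply cont3_const|].
    apply cont3_mult; [apply C1_3_cont | apply C1_3_cont_d_s]; apply Rw1_C1.
Qed.

Lemma cont_1d_energy_rate : cont_1d energy_rate.
Proof.
  apply (cont_1d_mult (fun _ => 1 / 2)); [apply cont_1d_const|].
  apply (cont_1d_int_Omega_time Rr a (fun r z s => 2 * (w1 r z s * d_s w1 r z s))).
  assert (Cw := C1_3_cont _ Rw1_C1); assert (Cws := C1_3_cont_d_s _ Rw1_C1); cont_auto.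
Qed.

Theorem energy_estimate :
  1 / 2 * int_Omega Rr a (fun r z => (w1 r z t) ^ 2)
  + nu / 2 * int_Omega_t Rr a t (fun r z s => (d_r w1 r z s) ^ 2 + (d_z w1 r z s) ^ 2)
  + nu * RInt (fun s => RInt (fun z => (w1 0 z s) ^ 2) (- a) a) 0 t
  <= 1 / nu * int_Omega_t Rr a t (fun r z s => (u1 r z s) ^ 4)
     + forcing_const nu * (L2Lp_Omega_t Rr a (6 / 5) t F1) ^ 2
     + int_Omega Rr a (fun r z => (w1 r z 0) ^ 2).
Proof.
  assert (Cw := C1_3_cont _ Rw1_C1); assert (Cwr := C1_3_cont_d_r _ Rw1_C1);
    assert (Cwz := C1_3_cont_d_z _ Rw1_C1).
  assert (CG := cont_1d_int_Omega_time Rr a (fun r z s => d_r w1 r z s ^ 2 + d_z w1 r z s ^ 2)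
    ltac:(cont_auto)).
  assert (CZ : cont_1d (fun s => RInt (fun z => w1 0 z s ^ 2) (- a) a)).
  { apply (cont_1d_RInt_param (fun s z => w1 0 z s ^ 2)).
    apply (cont_2d_slice_r (fun r z s => w1 r z s ^ 2)); cont_auto. }
  assert (CU := cont_1d_int_Omega_time Rr a (fun r z s => u1 r z s ^ 4)
    (cont3_pow _ 4 (C1_3_cont _ Ru1))).
  assert (CN := cont_1d_Lp_Omega_time Rr a (6 / 5) F1 ltac:(lra) CF1).
  assert (H := RInt_differential_inequality energy energy_rate dissipation supply t Ht
    is_derive_energy cont_1d_energy_rate
    ltac:(unfold dissipation; cont_auto) ltac:(unfold supply; cont_auto) energy_slice_bound).
  unfold energy, dissipation, supply in H; rewrite !RInt_lincomb in H by cont_auto.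
  assert (HN : 0 <= RInt (fun s => Lp_Omega Rr a (6 / 5) (fun r z => F1 r z s) ^ 2) 0 t)
    by (apply RInt_ge_0; [lra | cont_auto | intros; apply pow2_ge_0]).
  assert (H0 : 0 <= int_Omega Rr a (fun r z => w1 r z 0 ^ 2)).
  { assert (Cw0 := cont_2d_slice_s _ 0 Cw).
    rewrite int_Omega_rect_int; apply Rmult_le_pos; [assert (HPI := PI_RGT_0); lra|].
    apply rect_int_ge_0; try lra; [cont_auto|].
    intros; apply Rmult_le_pos; [apply pow2_ge_0 | lra]. }
  unfold int_Omega_t, L2Lp_Omega_t; rewrite pow2_sqrt by exact HN.
  lra.
Qed.

End EnergyEstimate.

Theorem lemma3p1 (Rr a nu : R) (HRr : 0 < Rr) (Ha : 0 < a) (Hnu : 0 < nu) :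
  exists c : R, 0 < c /\
  forall (T t : R) (vr vz u1 w1 F1 : field3),
    0 <= t <= T ->
    (* regularity ("solutions regular enough for the computations") *)
    C1_3 vr -> C1_3 vz -> C1_3 u1 -> reg2 w1 -> cont3 F1 ->
    (* div v = 0 in Omega *)
    (forall r z s, 0 < r < Rr -> - a < z < a -> 0 < s < t ->
       d_r vr r z s + vr r z s / r + d_z vz r z s = 0) ->
    (* v . n = 0 on S *)
    (forall z s, - a <= z <= a -> 0 < s < t -> vr Rr z s = 0) ->
    (forall r s, 0 <= r <= Rr -> 0 < s < t -> vz r a s = 0 /\ vz r (- a) s = 0) ->
    (* the equation for omega_1 in Omega^t *)
    (forall r z s, 0 < r < Rr -> - a < z < a -> 0 < s < t ->
       d_s w1 r z s + (vr r z s * d_r w1 r z s + vz r z s * d_z w1 r z s)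
       - nu * (d_r (d_r w1) r z s + / r * d_r w1 r z s + d_z (d_z w1) r z s
               + 2 / r * d_r w1 r z s)
       = 2 * u1 r z s * d_z u1 r z s + F1 r z s) ->
    (* omega_1 = 0 on S^t *)
    (forall z s, - a <= z <= a -> 0 < s < t -> w1 Rr z s = 0) ->
    (forall r s, 0 <= r <= Rr -> 0 < s < t -> w1 r a s = 0 /\ w1 r (- a) s = 0) ->
    1 / 2 * int_Omega Rr a (fun r z => (w1 r z t) ^ 2)
    + nu / 2 * int_Omega_t Rr a t
        (fun r z s => (d_r w1 r z s) ^ 2 + (d_z w1 r z s) ^ 2)
    + nu * RInt (fun s => RInt (fun z => (w1 0 z s) ^ 2) (- a) a) 0 t
    <= 1 / nu * int_Omega_t Rr a t (fun r z s => (u1 r z s) ^ 4)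
       + c * (L2Lp_Omega_t Rr a (6 / 5) t F1) ^ 2
       + int_Omega Rr a (fun r z => (w1 r z 0) ^ 2).
Proof.
  exists (forcing_const nu); split.
  - assert (HPI := PI_RGT_0); unfold forcing_const, young_sobolev_const.
    apply Rmult_lt_0_compat; [lra | apply Rdiv_lt_0_compat; [nra | exact Hnu]].
  - intros T t vr vz u1 w1 F1 Ht Rvr Rvz Ru1 Rw1 CF1 Hdiv _ _ Heq Hw_side Hw_ends.
    apply (energy_estimate Rr a nu t vr vz); auto; lra.
Qed.
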